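(* Let $\varphi$ be a Schwarz-type function, let $F\in\mathcal{P}$, and let $\omega$ be the Schwarz-type function with $F=\ell\circ\omega$. Then the following are equivalent: (a) $T_{F,\varphi}(f)\in\mathcal{P}$ for every $f\in\mathcal{P}$; (b) $T_{F,\varphi}(\ell_\lambda)\in\mathcal{P}$ for every $\lambda$ with $|\lambda|=1$; (c) for all $z\in\mathbb{D}$, $$4|\varphi(z)|\,|\mathrm{Im}\,\omega(z)|<(1-|\omega(z)|^2)(1-|\varphi(z)|^2),$$ equivalently, for all $z\in\mathbb{D}$, $$2|\varphi(z)|\left|\frac{\mathrm{Im}\,F(z)}{\mathrm{Re}\,F(z)}\right|<1-|\varphi(z)|^2;$$ (d) for all $z\in\mathbb{D}$, $$|\arg F(z)|<\frac{\pi}{2}-\arcsin\frac{2|\varphi(z)|}{1+|\varphi(z)|^2}.$$ Moreover, $\frac{\pi}{2}-\arcsin\frac{2|\varphi(z)|}{1+|\varphi(z)|^2}=\frac{\pi}{2}-\arctan\frac{2|\varphi(z)|}{1-|\varphi(z)|^2}=\arctan\frac{1-|\varphi(z)|^2}{2|\varphi(z)|}$, where for $\varphi(z)=0$ the last expression is understood as $\arctan(+\infty)=\pi/2$.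
   Context: $\mathbb{D}$ is the open unit disk. $\mathcal{P}$ is the set of analytic $f$ on $\mathbb{D}$ with $\mathrm{Re}\,f>0$ and $f(0)=1$. A Schwarz-type function is an analytic $\varphi:\mathbb{D}\to\mathbb{D}$ with $\varphi(0)=0$. $\ell(z)=\frac{1+z}{1-z}$ and, for $|\lambda|=1$, $\ell_\lambda(z)=\frac{1+\lambda z}{1-\lambda z}$. $T_{F,\varphi}(f)=F\cdot(f\circ\varphi)$. $\arg$ denotes the principal branch of the argument with values in $(-\pi,\pi]$. *)

From Stdlib Require Import Reals.
From Coquelicot Require Import Coquelicot.
Open Scope R_scope.

Definition inD (z : C) : Prop := Cmod z < 1.

Definition analytic_on_D (f : C -> C) : Prop :=
  forall z : C, inD z -> @ex_derive C_AbsRing C_NormedModule f z.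

Definition classP (f : C -> C) : Prop :=
  analytic_on_D f /\ (forall z, inD z -> 0 < Re (f z)) /\ f 0%C = 1%C.

Definition schwarz_type (phi : C -> C) : Prop :=
  analytic_on_D phi /\ (forall z, inD z -> inD (phi z)) /\ phi 0%C = 0%C.

Definition ell (z : C) : C := ((1 + z) / (1 - z))%C.
Definition ell_lam (lam : C) (z : C) : C := ((1 + lam * z) / (1 - lam * z))%C.

Definition T_op (F phi f : C -> C) : C -> C := fun z => (F z * f (phi z))%C.

(* Principal argument with values in (-PI, PI] (arg 0 := 0). *)
Definition Carg (z : C) : R :=
  let x := Re z in let y := Im z in
  if Rlt_dec 0 x then atan (y / x)
  else if Rlt_dec x 0 then
    (if Rle_dec 0 y then atan (y / x) + PI else atan (y / x) - PI)
  else if Rlt_dec 0 y then PI / 2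
  else if Rlt_dec y 0 then - (PI / 2)
  else 0.

(* arctan((1 - t^2)/(2 t)) for t > 0, and arctan(+oo) = PI/2 for t = 0. *)
Definition atan_ratio (t : R) : R :=
  if Req_EM_T t 0 then PI / 2 else atan ((1 - t ^ 2) / (2 * t)).

(* Write [f] in [P] as [ell o w_f], where the Cayley transform [w_f = (f - 1) / (f + 1)] is a
   Schwarz function.  The Schwarz lemma [|w_f v| <= |v|] puts [f (phi z)] in the closed disk
   [ell (|v| <= |phi z|)], and the boundary circle of that disk is swept out by the values
   [ell_lam (phi z) = ell (lam phi z)].  So (a) and (b) both say that multiplication by
   [F z] maps this disk into the right half-plane, which by the formula for [Re (F ell v)]
   is the inequality [2 t |Im F| < Re F (1 - t^2)] with [t = |phi z|]; (c) and (d) restate it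
   through [F = ell o omega] and through [arg F].
   The Schwarz lemma is proved from Cauchy's integral formula, which comes from Goursat's
   subdivision argument applied to a deformation of circles. *)

From Stdlib Require Import Reals Lra Lia.
From Coquelicot Require Import Coquelicot.
Open Scope R_scope.

(** * Complex derivatives and real-parametrised paths *)

(* Coquelicot's product and chain rules need the codomain [AbsRing_NormedModule C_AbsRing]
   rather than the [C_NormedModule] of [analytic_on_D]; see [analytic_on_D_iff]. *)
Notation is_Cderive f z l := (@is_derive C_AbsRing (AbsRing_NormedModule C_AbsRing) f z l).
Notation ex_Cderive f z := (exists l, is_Cderive f z l).
Notation is_path_derive g t l := (@is_derive R_AbsRing C_R_NormedModule g t l).
Notation CInt := (@RInt C_R_CompleteNormedModule).

(* [ring] only recognises equalities stated at type [C], not at a Coquelicot structure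
   whose carrier is [C]. *)
Ltac C_ring := match goal with |- ?a = ?b => change (@eq C a b) end; ring.

Lemma Cmod_reverse_triangle (u v : C) : Cmod u - Cmod v <= Cmod (u - v).
Proof.
  pose proof (Cmod_triangle (u - v) v) as H. replace (u - v + v)%C with u in H by ring. lra.
Qed.

Lemma Cmod_RtoC_mult (x : R) (z : C) : Cmod (x * z)%C = Rabs x * Cmod z.
Proof. now rewrite Cmod_mult, Cmod_R. Qed.

Lemma norm_C_R (z : C) : @norm R_AbsRing C_R_NormedModule z = Cmod z.
Proof.
  unfold norm at 1. cbn -[sqrt pow]. unfold prod_norm, Cmod. cbn -[sqrt pow].
  now rewrite <- (pow2_abs (fst z)), <- (pow2_abs (snd z)).
Qed.

Lemma scal_C_R (k : R) (u : C) : @scal _ C_R_NormedModule k u = (RtoC k * u)%C.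
Proof. exact (scal_R_Cmult k u). Qed.

Lemma analytic_on_D_iff (f : C -> C) :
  analytic_on_D f <-> forall z, inD z -> ex_Cderive f z.
Proof.
  split; intros H z Hz; destruct (H z Hz) as [l [_ Hl]]; exists l;
    (split; [apply is_linear_scal_l | exact Hl]).
Qed.

Lemma is_derive_eps {K : AbsRing} {V : NormedModule K} (f : K -> V) x l :
  is_derive f x l <-> forall eps : posreal, exists delta : posreal, forall y,
    norm (minus y x) < delta ->
    norm (minus (minus (f y) (f x)) (scal (minus y x) l)) <= eps * norm (minus y x).
Proof.
  split.
  - intros [_ H] eps.
    destruct (locally_le_locally_norm _ _ (H x (fun P HP => HP) eps)) as [d Hd].
    exists d. exact Hd.
  - intros H. split; [apply is_linear_scal_l|].
    intros y Hy. apply (@is_filter_lim_locally_unique K (AbsRing_NormedModule K)) in Hy.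
    subst y. intros eps. destruct (H eps) as [d Hd]. exists d. exact Hd.
Qed.

Lemma is_Cderive_Cmod (K : C -> C) z b :
  is_Cderive K z b <-> forall eps : posreal, exists delta : posreal, forall w,
    Cmod (w - z) < delta -> Cmod (K w - K z - (w - z) * b) <= eps * Cmod (w - z).
Proof.
  rewrite is_derive_eps. split; intros H eps; destruct (H eps) as [d Hd]; exists d; exact Hd.
Qed.

(* The complex derivative [h |-> h b] of [K] is in particular an R-linear differential. *)
Lemma is_path_derive_comp (K : C -> C) (g : R -> C) x b l :
  is_Cderive K (g x) b -> is_path_derive g x l ->
  is_path_derive (fun y => K (g y)) x (b * l)%C.
Proof.
  intros HK Hg.
  assert (HKR : @filterdiff R_AbsRing C_R_NormedModule C_R_NormedModule K
                  (locally (g x : C_R_NormedModule)) (fun h => (h * b)%C)).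
  { split.
    - repeat split.
      + intros u v. change (plus u v) with (u + v)%C.
        change (plus (u * b)%C (v * b)%C) with (u * b + v * b)%C. C_ring.
      + intros k u. rewrite !scal_C_R. C_ring.
      + exists (Cmod b + 1). split; [pose proof (Cmod_ge_0 b); lra|].
        intros u. rewrite !norm_C_R, Cmod_mult.
        pose proof (Cmod_ge_0 u). pose proof (Cmod_ge_0 b). nra.
    - intros y Hy. apply (@is_filter_lim_locally_unique R_AbsRing C_R_NormedModule) in Hy.
      subst y. intros eps. apply locally_le_locally_norm.
      destruct (proj1 (is_Cderive_Cmod K (g x) b) HK eps) as [d Hd].
      exists d. intros y Hy. unfold ball_norm in Hy. rewrite !norm_C_R in *. now apply Hd. }
  eapply filterdiff_ext_lin.
  - exact (filterdiff_comp' g K x _ _ Hg HKR).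
  - intros y. simpl. rewrite !scal_C_R. C_ring.
Qed.

Lemma is_Cderive_inv (z : C) : z <> 0%C -> is_Cderive Cinv z (- / (z * z))%C.
Proof.
  intros Hz. apply is_Cderive_Cmod. intros eps.
  pose proof (proj1 (Cmod_gt_0 z) Hz) as Hm. set (m := Cmod z) in *.
  assert (Hd : 0 < Rmin (m / 2) (eps * (m * m * m) / 2)).
  { apply Rmin_pos; [lra|]. pose proof (cond_pos eps).
    apply Rdiv_lt_0_compat; [|lra]. repeat apply Rmult_lt_0_compat; lra. }
  exists (mkposreal _ Hd). intros w Hw. simpl in Hw.
  pose proof (Rmin_l (m / 2) (eps * (m * m * m) / 2)).
  pose proof (Rmin_r (m / 2) (eps * (m * m * m) / 2)).
  pose proof (Cmod_ge_0 (w - z)) as Hwz.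
  assert (Hwm : m / 2 <= Cmod w).
  { pose proof (Cmod_reverse_triangle z w) as Hrev. fold m in Hrev.
    rewrite <- (Cmod_opp (z - w)), Copp_minus_distr in Hrev. lra. }
  assert (Hw0 : w <> 0%C) by (intros ->; rewrite Cmod_0 in Hwm; lra).
  replace (/ w - / z - (w - z) * - / (z * z))%C with ((w - z) * (w - z) / (w * z * z))%C
    by (field; auto).
  rewrite Cmod_div by (repeat apply Cmult_neq_0; auto). rewrite !Cmod_mult. fold m.
  apply Rle_trans with (Cmod (w - z) * (eps * (m * m * m) / 2) / (m / 2 * m * m)).
  - unfold Rdiv. apply Rmult_le_compat; try nra.
    + apply Rlt_le, Rinv_0_lt_compat. apply Rmult_lt_0_compat; nra.
    + apply Rinv_le_contravar; [apply Rmult_lt_0_compat; nra|].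
      apply Rmult_le_compat_r; [lra|]. apply Rmult_le_compat_r; lra.
  - right. simpl. field. lra.
Qed.

Lemma is_Cderive_mult (f g : C -> C) (z df dg : C) :
  is_Cderive f z df -> is_Cderive g z dg ->
  is_Cderive (fun w => f w * g w)%C z (df * g z + f z * dg)%C.
Proof. intros Hf Hg. exact (is_derive_mult f g z df dg Hf Hg Cmult_comm). Qed.

Lemma is_Cderive_comp (f g : C -> C) (z df dg : C) :
  is_Cderive f (g z) df -> is_Cderive g z dg -> is_Cderive (fun w => f (g w)) z (dg * df)%C.
Proof. exact (is_derive_comp (V := AbsRing_NormedModule C_AbsRing) f g z df dg). Qed.

Lemma is_Cderive_affine (alpha k w : C) : is_Cderive (fun v => alpha * v + k)%C w alpha.
Proof.
  apply is_Cderive_Cmod. intros eps. exists eps. intros v _.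
  replace (alpha * v + k - (alpha * w + k) - (v - w) * alpha)%C with (RtoC 0) by ring.
  rewrite Cmod_0. apply Rmult_le_pos; [apply Rlt_le, cond_pos | apply Cmod_ge_0].
Qed.

Lemma is_Cderive_affine_primitive (alpha beta w : C) :
  is_Cderive (fun v => alpha * v + beta * (v * v) / 2)%C w (alpha + beta * w)%C.
Proof.
  apply is_Cderive_Cmod. intros eps.
  assert (Hd : 0 < 2 * eps / (Cmod beta + 1)).
  { pose proof (cond_pos eps). pose proof (Cmod_ge_0 beta). apply Rdiv_lt_0_compat; lra. }
  exists (mkposreal _ Hd). intros v Hv. simpl in Hv.
  replace (alpha * v + beta * (v * v) / 2 - (alpha * w + beta * (w * w) / 2)
           - (v - w) * (alpha + beta * w))%C
    with (beta * (v - w) * (v - w) / 2)%C by (field; apply C1_nz).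
  rewrite Cmod_div, !Cmod_mult, Cmod_R, Rabs_pos_eq
    by (lra || (intros E; apply RtoC_inj in E; lra)).
  pose proof (Cmod_ge_0 beta). pose proof (Cmod_ge_0 (v - w)). pose proof (cond_pos eps).
  apply Rmult_lt_compat_r with (r := Cmod beta + 1) in Hv; [|lra].
  replace (2 * eps / (Cmod beta + 1) * (Cmod beta + 1)) with (2 * eps) in Hv by (field; lra).
  nra.
Qed.

Lemma ex_Cderive_const (c z : C) : ex_Cderive (fun _ => c) z.
Proof. eexists. apply (is_derive_const (V := AbsRing_NormedModule C_AbsRing)). Qed.

Lemma ex_Cderive_id (z : C) : ex_Cderive (fun w => w) z.
Proof. eexists. apply is_derive_id. Qed.

Lemma ex_Cderive_plus (f g : C -> C) (z : C) :
  ex_Cderive f z -> ex_Cderive g z -> ex_Cderive (fun w => f w + g w)%C z.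
Proof.
  intros [df Hf] [dg Hg]. eexists.
  exact (is_derive_plus (V := AbsRing_NormedModule C_AbsRing) f g z df dg Hf Hg).
Qed.

Lemma ex_Cderive_minus (f g : C -> C) (z : C) :
  ex_Cderive f z -> ex_Cderive g z -> ex_Cderive (fun w => f w - g w)%C z.
Proof.
  intros [df Hf] [dg Hg]. eexists.
  exact (is_derive_minus (V := AbsRing_NormedModule C_AbsRing) f g z df dg Hf Hg).
Qed.

Lemma ex_Cderive_mult (f g : C -> C) (z : C) :
  ex_Cderive f z -> ex_Cderive g z -> ex_Cderive (fun w => f w * g w)%C z.
Proof. intros [df Hf] [dg Hg]. eexists. exact (is_Cderive_mult f g z df dg Hf Hg). Qed.

Lemma ex_Cderive_comp (f g : C -> C) (z : C) :
  ex_Cderive f (g z) -> ex_Cderive g z -> ex_Cderive (fun w => f (g w)) z.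
Proof. intros [df Hf] [dg Hg]. eexists. exact (is_Cderive_comp f g z df dg Hf Hg). Qed.

Lemma ex_Cderive_div (f g : C -> C) (z : C) :
  ex_Cderive f z -> ex_Cderive g z -> g z <> 0%C -> ex_Cderive (fun w => f w / g w)%C z.
Proof.
  intros Hf Hg Hgz. apply ex_Cderive_mult; [exact Hf|].
  apply (ex_Cderive_comp Cinv g); [eexists; now apply is_Cderive_inv | exact Hg].
Qed.

Lemma ex_Cderive_pow (f : C -> C) n (z : C) : ex_Cderive f z -> ex_Cderive (fun w => f w ^ n)%C z.
Proof.
  intros Hf. induction n as [|n IH]; simpl.
  - apply ex_Cderive_const.
  - now apply ex_Cderive_mult.
Qed.

Lemma ex_Cderive_affine (alpha beta z : C) : ex_Cderive (fun w => alpha + beta * w)%C z.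
Proof.
  apply ex_Cderive_plus; [apply ex_Cderive_const|].
  apply ex_Cderive_mult; [apply ex_Cderive_const | apply ex_Cderive_id].
Qed.

Lemma is_Cderive_locally_lipschitz (f : C -> C) z b : is_Cderive f z b ->
  exists delta, 0 < delta /\
    forall w, Cmod (w - z) < delta -> Cmod (f w - f z) <= (Cmod b + 1) * Cmod (w - z).
Proof.
  intros Hf. destruct (proj1 (is_Cderive_Cmod f z b) Hf (mkposreal 1 Rlt_0_1)) as [d Hd].
  exists d. split; [apply cond_pos|]. intros w Hw. specialize (Hd w Hw). simpl in Hd.
  replace (f w - f z)%C with ((f w - f z - (w - z) * b) + (w - z) * b)%C by ring.
  eapply Rle_trans; [apply Cmod_triangle|]. rewrite Cmod_mult. lra.
Qed.

Lemma ex_Cderive_continuous_at (f : C -> C) z : ex_Cderive f z ->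
  forall eta, 0 < eta -> exists delta, 0 < delta /\
    forall w, Cmod (w - z) < delta -> Cmod (f w - f z) <= eta.
Proof.
  intros [b Hb] eta Heta. destruct (is_Cderive_locally_lipschitz f z b Hb) as (d & Hd & Hf).
  pose proof (Cmod_ge_0 b). set (d' := eta / (Cmod b + 1)).
  assert (Hd' : 0 < d') by (apply Rdiv_lt_0_compat; lra).
  exists (Rmin d d'). split; [now apply Rmin_pos|].
  intros w Hw. pose proof (Rmin_l d d'). pose proof (Rmin_r d d').
  eapply Rle_trans; [apply Hf; lra|].
  apply Rle_trans with ((Cmod b + 1) * d'); [apply Rmult_le_compat_l; lra|].
  right. unfold d'. field. lra.
Qed.

Lemma ex_Cderive_continuous (K : C -> C) (g : R -> C) x :
  ex_Cderive K (g x) -> @ex_derive R_AbsRing C_R_NormedModule g x ->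
  continuous (fun y => K (g y)) x.
Proof.
  intros [b HK] [l Hg]. apply (ex_derive_continuous (V := C_R_NormedModule)).
  eexists. exact (is_path_derive_comp K g x b l HK Hg).
Qed.

Lemma continuous_Cmult {U : UniformSpace} (f g : U -> C) x :
  continuous f x -> continuous g x -> continuous (fun y => f y * g y)%C x.
Proof.
  assert (E : forall (h : U -> C),
    @continuous U C_UniformSpace h x <-> @continuous U (AbsRing_UniformSpace C_AbsRing) h x).
  { intros h. split; intros H P HP; apply H;
      [apply locally_C | apply (proj1 (locally_C _ _))]; exact HP. }
  intros Hf Hg. apply E. apply (continuous_mult (K := C_AbsRing)); now apply E.
Qed.

Definition cis (t : R) : C := (cos t, sin t).

Lemma Cmod_cis t : Cmod (cis t) = 1.
Proof.
  unfold Cmod, cis; simpl. pose proof (sin2_cos2 t) as E. unfold Rsqr in E.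
  replace (cos t * (cos t * 1) + sin t * (sin t * 1)) with 1 by lra. apply sqrt_1.
Qed.

Lemma cis_neq_0 t : cis t <> 0%C.
Proof. intros E. pose proof (Cmod_cis t) as H. rewrite E, Cmod_0 in H. lra. Qed.

Lemma cis_2PI : cis (2 * PI) = cis 0.
Proof. unfold cis. now rewrite cos_2PI, sin_2PI, cos_0, sin_0. Qed.

Lemma Cmod_lipschitz_cis a b : Cmod (cis a - cis b) <= sqrt 2 * Rabs (a - b).
Proof.
  assert (Hlip : forall f f', (forall x, derivable_pt_lim f x (f' x)) ->
            (forall x, Rabs (f' x) <= 1) -> Rabs (f a - f b) <= Rabs (a - b)).
  { intros f f' Hd Hb. destruct (MVT_abs f f' b a (fun x _ => Hd x)) as [x [Hx _]].
    rewrite Hx. pose proof (Rabs_pos (a - b)). specialize (Hb x). nra. }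
  assert (Rabs (cos a - cos b) <= Rabs (a - b)).
  { apply (Hlip cos (fun x => - sin x) derivable_pt_lim_cos).
    intros x. rewrite Rabs_Ropp. apply Rabs_le, SIN_bound. }
  assert (Rabs (sin a - sin b) <= Rabs (a - b)).
  { apply (Hlip sin cos derivable_pt_lim_sin). intros x. apply Rabs_le, COS_bound. }
  eapply Rle_trans; [apply Cmod_2Rmax|]. apply Rmult_le_compat_l; [apply sqrt_pos|].
  unfold cis. simpl. apply Rmax_lub; unfold Rminus in *; lra.
Qed.

Lemma is_path_derive_cis t : is_path_derive cis t (Ci * cis t)%C.
Proof.
  apply (is_derive_ext (fun t => plus (scal (cos t) (RtoC 1 : C_R_NormedModule))
                                      (scal (sin t) (Ci : C_R_NormedModule)))).
  { intros u. rewrite !scal_C_R. unfold cis, Ci.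
    apply injective_projections; cbn -[cos sin]; ring. }
  eapply filterdiff_ext_lin.
  { apply (is_derive_plus (V := C_R_NormedModule));
      apply (is_derive_scal_l (V := C_R_NormedModule));
      [apply is_derive_cos | apply is_derive_sin]. }
  intros y. rewrite !scal_C_R. unfold cis, Ci.
  apply injective_projections; cbn -[cos sin]; ring.
Qed.

Lemma continuous_cis t : continuous cis t.
Proof.
  apply (ex_derive_continuous (V := C_R_NormedModule)). eexists. apply is_path_derive_cis.
Qed.

Lemma ex_CInt_continuous (f : R -> C) a b :
  (forall t, Rmin a b <= t <= Rmax a b -> continuous f t) -> @ex_RInt C_R_NormedModule f a b.
Proof. exact (@ex_RInt_continuous C_R_CompleteNormedModule f a b). Qed.

Lemma Cmod_CInt_le (f : R -> C) a b B : a <= b ->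
  (forall t, a <= t <= b -> continuous f t) ->
  (forall t, a <= t <= b -> Cmod (f t) <= B) -> Cmod (CInt f a b) <= (b - a) * B.
Proof.
  intros Hab Hc HB. rewrite <- norm_C_R.
  apply (norm_RInt_le_const (V := C_R_NormedModule) f a b); auto.
  - intros t Ht. rewrite norm_C_R. now apply HB.
  - apply (RInt_correct (V := C_R_CompleteNormedModule)). apply ex_CInt_continuous.
    intros t. rewrite Rmin_left, Rmax_right by lra. apply Hc.
Qed.

Lemma CInt_derive (g dg : R -> C) a b :
  (forall t, Rmin a b <= t <= Rmax a b -> is_path_derive g t (dg t)) ->
  (forall t, Rmin a b <= t <= Rmax a b -> continuous dg t) ->
  CInt dg a b = (g b - g a)%C.
Proof.
  intros Hd Hc. apply (is_RInt_unique (V := C_R_CompleteNormedModule)).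
  exact (is_RInt_derive (V := C_R_CompleteNormedModule) g dg a b Hd Hc).
Qed.

Lemma CInt_Chasles (f : R -> C) a b c :
  @ex_RInt C_R_NormedModule f a b -> @ex_RInt C_R_NormedModule f b c ->
  (CInt f a b + CInt f b c)%C = CInt f a c.
Proof. exact (RInt_Chasles (V := C_R_CompleteNormedModule) f a b c). Qed.

Lemma CInt_minus (f g : R -> C) a b :
  @ex_RInt C_R_NormedModule f a b -> @ex_RInt C_R_NormedModule g a b ->
  CInt (fun t => f t - g t)%C a b = (CInt f a b - CInt g a b)%C.
Proof. exact (RInt_minus (V := C_R_CompleteNormedModule) f g a b). Qed.

(** * Goursat's theorem for a parametrised rectangle *)

Lemma nested_intervals (a b : nat -> R) :
  (forall n, a n <= a (S n)) -> (forall n, b (S n) <= b n) -> (forall n, a n <= b n) ->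
  exists s, forall n, a n <= s <= b n.
Proof.
  intros Ha Hb Hab.
  assert (Hle : forall m n, a m <= b n).
  { assert (Ha' : forall m k, a m <= a (k + m)%nat).
    { intros m k. induction k as [|k IH]; [simpl; lra|]. specialize (Ha (k + m)%nat). simpl. lra. }
    assert (Hb' : forall n k, b (k + n)%nat <= b n).
    { intros n k. induction k as [|k IH]; [simpl; lra|]. specialize (Hb (k + n)%nat). simpl. lra. }
    intros m n. destruct (Nat.le_ge_cases m n) as [H|H].
    - replace n with ((n - m) + m)%nat by lia. specialize (Hab ((n - m) + m)%nat).
      specialize (Ha' m (n - m)%nat). lra.
    - replace m with ((m - n) + n)%nat by lia. specialize (Hab ((m - n) + n)%nat).
      specialize (Hb' n (m - n)%nat). lra. }
  destruct (completeness (fun x => exists n, x = a n)) as [s [Hub Hlub]].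
  - exists (b 0%nat). intros x [n ->]. apply Hle.
  - exists (a 0%nat). now exists 0%nat.
  - exists s. intros n. split.
    + apply Hub. now exists n.
    + apply Hlub. intros x [m ->]. apply Hle.
Qed.

Lemma exists_div_pow2_lt (x delta : R) : 0 < delta -> exists n, x / 2 ^ n < delta.
Proof.
  intros Hd.
  destruct (Pow_x_infinity 2 ltac:(rewrite Rabs_pos_eq; lra) (Rabs x / delta + 1)) as [n Hn].
  exists n. specialize (Hn n (Nat.le_refl n)). rewrite Rabs_pos_eq in Hn by (apply pow_le; lra).
  pose proof (pow_lt 2 n ltac:(lra)) as H2. apply Rmult_lt_reg_r with (2 ^ n); [lra|].
  unfold Rdiv. rewrite Rmult_assoc, Rinv_l, Rmult_1_r by lra.
  apply Rle_lt_trans with (Rabs x); [apply Rle_abs|].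
  assert (Rabs x / delta * delta = Rabs x) by (field; lra). nra.
Qed.

(* Goursat's subdivision argument, abstracted from the integrals. *)
Section Quadrisection.

Variables (B : R -> R -> R -> R -> C) (a0 b0 c0 d0 : R).
Hypothesis Hab0 : a0 < b0.
Hypothesis Hcd0 : c0 < d0.
Hypothesis B_split : forall a b c d, a0 <= a <= b -> b <= b0 -> c0 <= c <= d -> d <= d0 ->
  let m := (a + b) / 2 in let n := (c + d) / 2 in
  B a b c d = (B a m c n + B m b c n + B a m n d + B m b n d)%C.
Hypothesis B_small : forall s t, a0 <= s <= b0 -> c0 <= t <= d0 -> forall eps, 0 < eps ->
  exists delta, 0 < delta /\ forall a b c d, a0 <= a <= s -> s <= b <= b0 ->
    c0 <= c <= t -> t <= d <= d0 -> b - a < delta -> d - c < delta ->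
    Cmod (B a b c d) <= eps * (b - a + (d - c)) ^ 2.

Record rect := Rect { ra : R; rb : R; rc : R; rd : R }.

Let Bq (q : rect) := B (ra q) (rb q) (rc q) (rd q).

Definition quarter (q : rect) : rect :=
  let m := (ra q + rb q) / 2 in let n := (rc q + rd q) / 2 in
  let q1 := Rect (ra q) m (rc q) n in let q2 := Rect m (rb q) (rc q) n in
  let q3 := Rect (ra q) m n (rd q) in let q4 := Rect m (rb q) n (rd q) in
  if Rle_dec (Cmod (Bq q) / 4) (Cmod (Bq q1)) then q1 else
  if Rle_dec (Cmod (Bq q) / 4) (Cmod (Bq q2)) then q2 else
  if Rle_dec (Cmod (Bq q) / 4) (Cmod (Bq q3)) then q3 else q4.

Lemma quarter_spec q : a0 <= ra q <= rb q -> rb q <= b0 -> c0 <= rc q <= rd q -> rd q <= d0 ->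
  let q' := quarter q in
  ra q <= ra q' <= rb q' /\ rb q' <= rb q /\ rc q <= rc q' <= rd q' /\ rd q' <= rd q /\
  rb q' - ra q' = (rb q - ra q) / 2 /\ rd q' - rc q' = (rd q - rc q) / 2 /\
  Cmod (Bq q) <= 4 * Cmod (Bq q').
Proof.
  intros Ha Hb Hc Hd. pose proof (B_split (ra q) (rb q) (rc q) (rd q) Ha Hb Hc Hd) as E.
  cbv zeta in E. unfold quarter, Bq in *. cbn [ra rb rc rd] in *.
  set (m := (ra q + rb q) / 2) in *. set (n := (rc q + rd q) / 2) in *.
  destruct (Rle_dec _ _) as [H1|H1]; [simpl; repeat split; unfold m, n in *; lra|].
  destruct (Rle_dec _ _) as [H2|H2]; [simpl; repeat split; unfold m, n in *; lra|].
  destruct (Rle_dec _ _) as [H3|H3]; [simpl; repeat split; unfold m, n in *; lra|].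
  simpl. repeat split; try (unfold m, n in *; lra).
  apply Rnot_le_lt in H1, H2, H3. rewrite E in H1, H2, H3 |- *.
  set (x1 := B (ra q) m (rc q) n) in *. set (x2 := B m (rb q) (rc q) n) in *.
  set (x3 := B (ra q) m n (rd q)) in *. set (x4 := B m (rb q) n (rd q)) in *.
  pose proof (Cmod_triangle (x1 + x2 + x3) x4). pose proof (Cmod_triangle (x1 + x2) x3).
  pose proof (Cmod_triangle x1 x2). lra.
Qed.

Fixpoint nest (k : nat) : rect :=
  match k with O => Rect a0 b0 c0 d0 | S k => quarter (nest k) end.

Lemma nest_spec k :
  a0 <= ra (nest k) <= rb (nest k) /\ rb (nest k) <= b0 /\
  c0 <= rc (nest k) <= rd (nest k) /\ rd (nest k) <= d0 /\
  rb (nest k) - ra (nest k) = (b0 - a0) / 2 ^ k /\ rd (nest k) - rc (nest k) = (d0 - c0) / 2 ^ k /\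
  Cmod (B a0 b0 c0 d0) <= 4 ^ k * Cmod (Bq (nest k)).
Proof.
  induction k as [|k IH]; simpl.
  - unfold Bq; simpl. repeat split; lra.
  - destruct IH as (Ha & Hb & Hc & Hd & Eab & Ecd & HB).
    destruct (quarter_spec (nest k) Ha Hb Hc Hd) as (Ha' & Hb' & Hc' & Hd' & Eab' & Ecd' & HB').
    pose proof (pow_lt 2 k ltac:(lra)). pose proof (pow_lt 4 k ltac:(lra)).
    repeat split; try lra.
    + rewrite Eab', Eab. field. lra.
    + rewrite Ecd', Ecd. field. lra.
    + nra.
Qed.

Lemma nest_mono k :
  ra (nest k) <= ra (nest (S k)) /\ rb (nest (S k)) <= rb (nest k) /\
  rc (nest k) <= rc (nest (S k)) /\ rd (nest (S k)) <= rd (nest k).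
Proof.
  destruct (nest_spec k) as (Ha & Hb & Hc & Hd & _).
  destruct (quarter_spec (nest k) Ha Hb Hc Hd) as (? & ? & ? & ? & _). simpl. lra.
Qed.

Theorem quadrisection_zero : B a0 b0 c0 d0 = 0%C.
Proof.
  destruct (Req_dec (Cmod (B a0 b0 c0 d0)) 0) as [Z|NZ]; [now apply Cmod_eq_0|exfalso].
  pose proof (Cmod_ge_0 (B a0 b0 c0 d0)) as Hbeta.
  set (beta := Cmod (B a0 b0 c0 d0)) in *.
  destruct (nested_intervals (fun k => ra (nest k)) (fun k => rb (nest k))) as [s Hs];
    try (intros k; pose proof (nest_mono k); pose proof (nest_spec k); simpl in *; lra).
  destruct (nested_intervals (fun k => rc (nest k)) (fun k => rd (nest k))) as [t Ht];
    try (intros k; pose proof (nest_mono k); pose proof (nest_spec k); simpl in *; lra).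
  set (L := b0 - a0 + (d0 - c0)).
  assert (HL : 0 < L) by (unfold L; lra).
  destruct (B_small s t ltac:(specialize (Hs 0%nat); simpl in Hs; lra)
                       ltac:(specialize (Ht 0%nat); simpl in Ht; lra)
                       (beta / (2 * L ^ 2)) ltac:(apply Rdiv_lt_0_compat; nra))
    as (delta & Hdelta & Hsmall).
  destruct (exists_div_pow2_lt L delta Hdelta) as [k Hk].
  destruct (nest_spec k) as (Ha & Hb & Hc & Hd & Eab & Ecd & HB).
  pose proof (pow_lt 2 k ltac:(lra)) as H2k.
  assert (Hsize : (b0 - a0) / 2 ^ k < delta /\ (d0 - c0) / 2 ^ k < delta).
  { unfold L in Hk. unfold Rdiv in *. split; nra. }
  specialize (Hs k). specialize (Ht k). simpl in Hs, Ht.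
  specialize (Hsmall (ra (nest k)) (rb (nest k)) (rc (nest k)) (rd (nest k))
                ltac:(lra) ltac:(lra) ltac:(lra) ltac:(lra) ltac:(lra) ltac:(lra)).
  rewrite Eab, Ecd in Hsmall.
  replace ((b0 - a0) / 2 ^ k + (d0 - c0) / 2 ^ k) with (L / 2 ^ k) in Hsmall
    by (unfold L; field; lra).
  assert (E4 : 4 ^ k = 2 ^ k * 2 ^ k) by (rewrite <- Rpow_mult_distr; f_equal; lra).
  assert (4 ^ k * (beta / (2 * L ^ 2) * (L / 2 ^ k) ^ 2) = beta / 2)
    by (rewrite E4; field; lra).
  pose proof (pow_lt 4 k ltac:(lra)).
  fold (Bq (nest k)) in Hsmall. fold beta in HB.
  apply (Rmult_le_compat_l (4 ^ k)) in Hsmall; [|lra].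
  assert (0 < beta) by (destruct Hbeta as [|E]; [auto | now contradiction NZ]).
  lra.
Qed.

End Quadrisection.

Lemma between_Rmin_Rmax lo hi x y s : lo <= x <= hi -> lo <= y <= hi ->
  Rmin x y <= s <= Rmax x y -> lo <= s <= hi.
Proof.
  intros Hx Hy [H1 H2]. split.
  - apply Rle_trans with (Rmin x y); [apply Rmin_glb|]; lra.
  - apply Rle_trans with (Rmax x y); [|apply Rmax_lub]; lra.
Qed.

Section Goursat.

Variables (Phi Phis Phit : R -> R -> C) (a0 b0 c0 d0 M N : R).
Hypothesis Hab0 : a0 < b0.
Hypothesis Hcd0 : c0 < d0.
Definition in_rect s t := a0 <= s <= b0 /\ c0 <= t <= d0.
Hypothesis Phi_ds : forall s t, in_rect s t -> is_path_derive (fun s => Phi s t) s (Phis s t).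
Hypothesis Phi_dt : forall s t, in_rect s t -> is_path_derive (fun t => Phi s t) t (Phit s t).
Hypothesis Phis_cont : forall s t, in_rect s t -> continuous (fun s => Phis s t) s.
Hypothesis Phit_cont : forall s t, in_rect s t -> continuous (fun t => Phit s t) t.
Hypothesis Phi_lipschitz : forall s t s' t', in_rect s t -> in_rect s' t' ->
  Cmod (Phi s t - Phi s' t') <= M * (Rabs (s - s') + Rabs (t - t')).
Hypothesis Phi_d_bound : forall s t, in_rect s t -> Cmod (Phis s t) <= N /\ Cmod (Phit s t) <= N.

Definition edge_s (G : C -> C) t a b := CInt (fun s => G (Phi s t) * Phis s t)%C a b.
Definition edge_t (G : C -> C) s c d := CInt (fun t => G (Phi s t) * Phit s t)%C c d.
Definition rect_integral (G : C -> C) a b c d :=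
  (edge_s G c a b + edge_t G b c d - edge_s G d a b - edge_t G a c d)%C.

Definition holo_on_rect (G : C -> C) := forall s t, in_rect s t -> ex_Cderive G (Phi s t).

Lemma continuous_edge_s G s t : holo_on_rect G -> in_rect s t ->
  continuous (fun s => G (Phi s t) * Phis s t)%C s.
Proof.
  intros HG Hst. apply continuous_Cmult; [|now apply Phis_cont].
  apply ex_Cderive_continuous; [now apply HG | eexists; now apply Phi_ds].
Qed.

Lemma continuous_edge_t G s t : holo_on_rect G -> in_rect s t ->
  continuous (fun t => G (Phi s t) * Phit s t)%C t.
Proof.
  intros HG Hst. apply continuous_Cmult; [|now apply Phit_cont].
  apply ex_Cderive_continuous; [now apply HG | eexists; now apply Phi_dt].
Qed.

Lemma ex_edge_s G t a b : holo_on_rect G -> c0 <= t <= d0 -> a0 <= a <= b0 -> a0 <= b <= b0 ->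
  @ex_RInt C_R_NormedModule (fun s => G (Phi s t) * Phis s t)%C a b.
Proof.
  intros HG Ht Ha Hb. apply ex_CInt_continuous. intros s Hs.
  apply continuous_edge_s; [exact HG|].
  split; [exact (between_Rmin_Rmax _ _ _ _ _ Ha Hb Hs) | exact Ht].
Qed.

Lemma ex_edge_t G s c d : holo_on_rect G -> a0 <= s <= b0 -> c0 <= c <= d0 -> c0 <= d <= d0 ->
  @ex_RInt C_R_NormedModule (fun t => G (Phi s t) * Phit s t)%C c d.
Proof.
  intros HG Hs Hc Hd. apply ex_CInt_continuous. intros t Ht.
  apply continuous_edge_t; [exact HG|].
  split; [exact Hs | exact (between_Rmin_Rmax _ _ _ _ _ Hc Hd Ht)].
Qed.

Lemma rect_integral_split G a b c d : holo_on_rect G ->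
  a0 <= a <= b -> b <= b0 -> c0 <= c <= d -> d <= d0 ->
  let m := (a + b) / 2 in let n := (c + d) / 2 in
  rect_integral G a b c d = (rect_integral G a m c n + rect_integral G m b c n +
                             rect_integral G a m n d + rect_integral G m b n d)%C.
Proof.
  intros HG Ha Hb Hc Hd m n.
  assert (Es : forall t, c0 <= t <= d0 -> edge_s G t a b = (edge_s G t a m + edge_s G t m b)%C).
  { intros t Ht. unfold edge_s. symmetry.
    apply CInt_Chasles; apply ex_edge_s; unfold m; auto; lra. }
  assert (Et : forall s, a0 <= s <= b0 -> edge_t G s c d = (edge_t G s c n + edge_t G s n d)%C).
  { intros s Hs. unfold edge_t. symmetry.
    apply CInt_Chasles; apply ex_edge_t; unfold n; auto; lra. }
  unfold rect_integral. rewrite (Es c), (Es d), (Et a), (Et b) by lra. C_ring.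
Qed.

Lemma rect_integral_minus G H a b c d : holo_on_rect G -> holo_on_rect H ->
  a0 <= a <= b0 -> a0 <= b <= b0 -> c0 <= c <= d0 -> c0 <= d <= d0 ->
  rect_integral (fun w => G w - H w)%C a b c d =
  (rect_integral G a b c d - rect_integral H a b c d)%C.
Proof.
  intros HG HH Ha Hb Hc Hd. unfold rect_integral, edge_s, edge_t.
  assert (Es : forall t, c0 <= t <= d0 ->
    CInt (fun s => (G (Phi s t) - H (Phi s t)) * Phis s t)%C a b =
    (CInt (fun s => G (Phi s t) * Phis s t)%C a b -
     CInt (fun s => H (Phi s t) * Phis s t)%C a b)%C).
  { intros t Ht. rewrite <- CInt_minus by (apply ex_edge_s; auto).
    apply (RInt_ext (V := C_R_CompleteNormedModule)). intros s _. C_ring. }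
  assert (Et : forall s, a0 <= s <= b0 ->
    CInt (fun t => (G (Phi s t) - H (Phi s t)) * Phit s t)%C c d =
    (CInt (fun t => G (Phi s t) * Phit s t)%C c d -
     CInt (fun t => H (Phi s t) * Phit s t)%C c d)%C).
  { intros s Hs. rewrite <- CInt_minus by (apply ex_edge_t; auto).
    apply (RInt_ext (V := C_R_CompleteNormedModule)). intros t _. C_ring. }
  rewrite (Es c), (Es d), (Et a), (Et b) by auto. C_ring.
Qed.

Lemma rect_integral_affine alpha beta a b c d :
  a0 <= a <= b0 -> a0 <= b <= b0 -> c0 <= c <= d0 -> c0 <= d <= d0 ->
  rect_integral (fun w => alpha + beta * w)%C a b c d = 0%C.
Proof.
  intros Ha Hb Hc Hd.
  set (P := fun w : C => (alpha * w + beta * (w * w) / 2)%C).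
  assert (HL : holo_on_rect (fun w => alpha + beta * w)%C)
    by (intros s t _; apply ex_Cderive_affine).
  assert (Es : forall t x y, c0 <= t <= d0 -> a0 <= x <= b0 -> a0 <= y <= b0 ->
    edge_s (fun w => alpha + beta * w)%C t x y = (P (Phi y t) - P (Phi x t))%C).
  { intros t x y Ht Hx Hy. apply (CInt_derive (fun s => P (Phi s t))); intros s Hs;
      assert (Hst : in_rect s t)
        by (split; [exact (between_Rmin_Rmax _ _ _ _ _ Hx Hy Hs) | exact Ht]).
    - apply is_path_derive_comp; [apply is_Cderive_affine_primitive | now apply Phi_ds].
    - exact (continuous_edge_s _ s t HL Hst). }
  assert (Et : forall s x y, a0 <= s <= b0 -> c0 <= x <= d0 -> c0 <= y <= d0 ->
    edge_t (fun w => alpha + beta * w)%C s x y = (P (Phi s y) - P (Phi s x))%C).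
  { intros s x y Hs Hx Hy. apply (CInt_derive (fun t => P (Phi s t))); intros t Ht;
      assert (Hst : in_rect s t)
        by (split; [exact Hs | exact (between_Rmin_Rmax _ _ _ _ _ Hx Hy Ht)]).
    - apply is_path_derive_comp; [apply is_Cderive_affine_primitive | now apply Phi_dt].
    - exact (continuous_edge_t _ s t HL Hst). }
  unfold rect_integral. rewrite !Es, !Et by auto. C_ring.
Qed.

Lemma edge_s_bound G t a b Bd : holo_on_rect G -> c0 <= t <= d0 -> a0 <= a <= b -> b <= b0 ->
  (forall s, a <= s <= b -> Cmod (G (Phi s t)) <= Bd) ->
  Cmod (edge_s G t a b) <= (b - a) * (Bd * N).
Proof.
  intros HG Ht Ha Hb HB. apply Cmod_CInt_le; [lra| |].
  - intros s Hs. apply continuous_edge_s; [exact HG|]. split; [lra|exact Ht].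
  - intros s Hs. rewrite Cmod_mult. apply Rmult_le_compat; try apply Cmod_ge_0; [now apply HB|].
    apply Phi_d_bound. split; [lra|exact Ht].
Qed.

Lemma edge_t_bound G s c d Bd : holo_on_rect G -> a0 <= s <= b0 -> c0 <= c <= d -> d <= d0 ->
  (forall t, c <= t <= d -> Cmod (G (Phi s t)) <= Bd) ->
  Cmod (edge_t G s c d) <= (d - c) * (Bd * N).
Proof.
  intros HG Hs Hc Hd HB. apply Cmod_CInt_le; [lra| |].
  - intros t Ht. apply continuous_edge_t; [exact HG|]. split; [exact Hs|lra].
  - intros t Ht. rewrite Cmod_mult. apply Rmult_le_compat; try apply Cmod_ge_0; [now apply HB|].
    apply Phi_d_bound. split; [exact Hs|lra].
Qed.

Lemma rect_integral_bound G a b c d Bd : holo_on_rect G ->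
  a0 <= a <= b -> b <= b0 -> c0 <= c <= d -> d <= d0 ->
  (forall s t, a <= s <= b -> c <= t <= d -> Cmod (G (Phi s t)) <= Bd) ->
  Cmod (rect_integral G a b c d) <= 2 * (b - a + (d - c)) * (Bd * N).
Proof.
  intros HG Ha Hb Hc Hd HB. unfold rect_integral.
  pose proof (edge_s_bound G c a b Bd HG ltac:(lra) Ha Hb (fun s Hs => HB s c Hs ltac:(lra))).
  pose proof (edge_s_bound G d a b Bd HG ltac:(lra) Ha Hb (fun s Hs => HB s d Hs ltac:(lra))).
  pose proof (edge_t_bound G b c d Bd HG ltac:(lra) Hc Hd (fun t Ht => HB b t ltac:(lra) Ht)).
  pose proof (edge_t_bound G a c d Bd HG ltac:(lra) Hc Hd (fun t Ht => HB a t ltac:(lra) Ht)).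
  set (e1 := edge_s G c a b) in *. set (e2 := edge_t G b c d) in *.
  set (e3 := edge_s G d a b) in *. set (e4 := edge_t G a c d) in *.
  unfold Cminus. rewrite <- (Cmod_opp e3), <- (Cmod_opp e4) in *.
  pose proof (Cmod_triangle (e1 + e2 + - e3) (- e4)).
  pose proof (Cmod_triangle (e1 + e2) (- e3)). pose proof (Cmod_triangle e1 e2). lra.
Qed.

(* Near a point [p = Phi s t] where [K] is differentiable, [K] is affine up to [o(|w - p|)],
   the affine part integrates to zero, and the boundary of a rectangle of size [h] has length
   [O(h)] and image of diameter [O(h)]. *)
Lemma rect_integral_small K s t : holo_on_rect K -> a0 <= s <= b0 -> c0 <= t <= d0 ->
  forall eps, 0 < eps -> exists delta, 0 < delta /\ forall a b c d, a0 <= a <= s -> s <= b <= b0 ->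
    c0 <= c <= t -> t <= d <= d0 -> b - a < delta -> d - c < delta ->
    Cmod (rect_integral K a b c d) <= eps * (b - a + (d - c)) ^ 2.
Proof.
  intros HK Hs Ht eps Heps. assert (Hst : in_rect s t) by (split; assumption).
  destruct (HK s t Hst) as [beta Hbeta]. set (p := Phi s t) in *.
  set (M' := Rabs M + 1). set (N' := Rabs N + 1).
  assert (HM' : 0 < M') by (unfold M'; pose proof (Rabs_pos M); lra).
  assert (HN : 0 <= N < N').
  { pose proof (Cmod_ge_0 (Phis s t)). pose proof (Phi_d_bound s t Hst). pose proof (Rle_abs N).
    unfold N'. lra. }
  set (eps' := eps / (4 * M' * N')).
  assert (Heps' : 0 < eps') by (unfold eps'; apply Rdiv_lt_0_compat; nra).
  destruct (proj1 (is_Cderive_Cmod K p beta) Hbeta (mkposreal _ Heps')) as [delta' Hdelta'].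
  simpl in Hdelta'.
  exists (delta' / (2 * M')). split; [apply Rdiv_lt_0_compat; [apply cond_pos|lra]|].
  intros a b c d Ha Hb Hc Hd Hba Hdc. set (h := b - a + (d - c)).
  set (L := fun w => (K p - beta * p + beta * w)%C).
  assert (HL : holo_on_rect L) by (intros ? ? _; apply ex_Cderive_affine).
  assert (HKL : holo_on_rect (fun w => K w - L w)%C)
    by (intros ? ? H; apply ex_Cderive_minus; [now apply HK | now apply HL]).
  assert (E : rect_integral K a b c d = rect_integral (fun w => K w - L w)%C a b c d).
  { rewrite rect_integral_minus by (auto; lra).
    unfold L. rewrite rect_integral_affine by lra. C_ring. }
  assert (Hclose : forall s' t', a <= s' <= b -> c <= t' <= d ->
                     Cmod (K (Phi s' t') - L (Phi s' t')) <= eps' * (M' * h)).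
  { intros s' t' Hs' Ht'.
    assert (Hdist : Cmod (Phi s' t' - p) <= M' * h).
    { eapply Rle_trans; [apply Phi_lipschitz; split; lra|].
      assert (Rabs (s' - s) <= b - a) by (apply Rabs_le; lra).
      assert (Rabs (t' - t) <= d - c) by (apply Rabs_le; lra).
      pose proof (Rabs_pos (s' - s)). pose proof (Rabs_pos (t' - t)). pose proof (Rabs_pos M).
      apply Rle_trans with (Rabs M * (Rabs (s' - s) + Rabs (t' - t))).
      - apply Rmult_le_compat_r; [lra | apply Rle_abs].
      - unfold M', h. apply Rmult_le_compat; lra. }
    replace (K (Phi s' t') - L (Phi s' t'))%C with (K (Phi s' t') - K p - (Phi s' t' - p) * beta)%C
      by (unfold L; C_ring).
    eapply Rle_trans; [apply Hdelta'|apply Rmult_le_compat_l; lra].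
    apply Rle_lt_trans with (M' * h); [exact Hdist|].
    apply Rlt_le_trans with (M' * (2 * (delta' / (2 * M')))).
    - apply Rmult_lt_compat_l; unfold h; lra.
    - right. field. lra. }
  rewrite E. eapply Rle_trans;
    [apply (rect_integral_bound _ a b c d (eps' * (M' * h))); auto; lra|].
  assert (0 <= h) by (unfold h; lra).
  apply Rle_trans with (2 * h * (eps' * (M' * h) * N')).
  - apply Rmult_le_compat_l; [lra|]. apply Rmult_le_compat_l; [|lra].
    apply Rmult_le_pos; [lra | nra].
  - replace (2 * h * (eps' * (M' * h) * N')) with (eps * h ^ 2 / 2) by (unfold eps'; field; lra).
    fold h. nra.
Qed.

Theorem rect_integral_holo K : holo_on_rect K -> rect_integral K a0 b0 c0 d0 = 0%C.
Proof.
  intros HK. apply quadrisection_zero; [exact Hab0 | exact Hcd0 | |].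
  - intros a b c d Ha Hb Hc Hd. now apply rect_integral_split.
  - intros s t Hs Ht. now apply rect_integral_small.
Qed.

End Goursat.

(** * Integrals over circles *)

Definition circle_integral (K : C -> C) (c : C) (r : R) : C :=
  CInt (fun t => K (c + r * cis t) * (r * (Ci * cis t)))%C 0 (2 * PI).

Lemma is_path_derive_circle (c : C) (r t : R) :
  is_path_derive (fun t => c + r * cis t)%C t (r * (Ci * cis t))%C.
Proof.
  apply (is_derive_ext (fun t => r * cis t + c)%C); [intros; C_ring|].
  exact (is_path_derive_comp (fun w => r * w + c)%C cis t (RtoC r) _
           (is_Cderive_affine _ _ _) (is_path_derive_cis t)).
Qed.

Lemma continuous_circle_integrand (K : C -> C) (c : C) (r t : R) :
  ex_Cderive K (c + r * cis t)%C ->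
  continuous (fun t => K (c + r * cis t) * (r * (Ci * cis t)))%C t.
Proof.
  intros HK.
  apply (continuous_Cmult (fun t => K (c + r * cis t)%C) (fun t => (r * (Ci * cis t))%C) t).
  - apply (ex_Cderive_continuous K (fun t => c + r * cis t)%C); [exact HK|].
    eexists. apply is_path_derive_circle.
  - apply (continuous_Cmult (fun _ => RtoC r) (fun t => (Ci * cis t)%C)); [apply continuous_const|].
    apply (continuous_Cmult (fun _ => Ci) cis); [apply continuous_const | apply continuous_cis].
Qed.

Lemma Cmod_circle (c : C) (r t : R) : 0 <= r -> Cmod (c + r * cis t - c) = r.
Proof.
  intros Hr. replace (c + r * cis t - c)%C with (r * cis t)%C by ring.
  now rewrite Cmod_RtoC_mult, Cmod_cis, Rmult_1_r, Rabs_pos_eq.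
Qed.

Lemma Cmod_circle_integral_le (K : C -> C) (c : C) (r B : R) : 0 <= r ->
  (forall t, ex_Cderive K (c + r * cis t)%C) -> (forall t, Cmod (K (c + r * cis t)%C) <= B) ->
  Cmod (circle_integral K c r) <= 2 * PI * (r * B).
Proof.
  intros Hr HK HB. pose proof PI_RGT_0. unfold circle_integral.
  replace (2 * PI * (r * B)) with ((2 * PI - 0) * (B * r)) by ring.
  apply Cmod_CInt_le; [lra | intros t _; now apply continuous_circle_integrand|].
  intros t _. rewrite Cmod_mult, Cmod_RtoC_mult, Cmod_mult, Cmod_Ci, Cmod_cis, Rabs_pos_eq by lra.
  rewrite !Rmult_1_l, Rmult_1_r. apply Rmult_le_compat_r; auto.
Qed.

Lemma circle_integral_ext (f g : C -> C) (c : C) (r : R) :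
  (forall t, f (c + r * cis t)%C = g (c + r * cis t)%C) ->
  circle_integral f c r = circle_integral g c r.
Proof.
  intros E. unfold circle_integral. apply (RInt_ext (V := C_R_CompleteNormedModule)).
  intros t _. now rewrite E.
Qed.

Lemma circle_integral_minus (f g : C -> C) (c : C) (r : R) :
  (forall t, ex_Cderive f (c + r * cis t)%C) -> (forall t, ex_Cderive g (c + r * cis t)%C) ->
  circle_integral (fun w => f w - g w)%C c r = (circle_integral f c r - circle_integral g c r)%C.
Proof.
  intros Hf Hg. unfold circle_integral. rewrite <- CInt_minus.
  - apply (RInt_ext (V := C_R_CompleteNormedModule)). intros t _. C_ring.
  - apply ex_CInt_continuous. intros t _. now apply continuous_circle_integrand.
  - apply ex_CInt_continuous. intros t _. now apply continuous_circle_integrand.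
Qed.

(* On the circle [w = c + eps e^(it)] the integrand of [circle_integral K c eps] is
   [i ((w - c) K(w))]. *)
Lemma circle_integral_near_pole (K : C -> C) (c a : C) (eps eta : R) : 0 < eps ->
  (forall t, ex_Cderive K (c + eps * cis t)%C) ->
  (forall t, Cmod ((c + eps * cis t - c) * K (c + eps * cis t) - a)%C <= eta) ->
  Cmod (circle_integral K c eps - RtoC (2 * PI) * Ci * a)%C <= 2 * PI * eta.
Proof.
  intros Heps HK Hclose. pose proof PI_RGT_0. unfold circle_integral.
  replace (RtoC (2 * PI) * Ci * a)%C with (CInt (fun _ => Ci * a)%C 0 (2 * PI))
    by (rewrite (RInt_const (V := C_R_CompleteNormedModule)), scal_C_R, Rminus_0_r; C_ring).
  rewrite <- CInt_minus.
  2: { apply ex_CInt_continuous. intros t _. now apply continuous_circle_integrand. }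
  2: { apply ex_CInt_continuous. intros t _. apply continuous_const. }
  replace (2 * PI * eta) with ((2 * PI - 0) * eta) by ring.
  apply Cmod_CInt_le; [lra| |].
  - intros t _. apply (continuous_minus (V := C_R_NormedModule)); [|apply continuous_const].
    now apply continuous_circle_integrand.
  - intros t _.
    replace (K (c + eps * cis t) * (eps * (Ci * cis t)) - Ci * a)%C
      with (Ci * ((c + eps * cis t - c) * K (c + eps * cis t) - a))%C by ring.
    rewrite Cmod_mult, Cmod_Ci, Rmult_1_l. apply Hclose.
Qed.

Section Annulus.

Variables (c : C) (eps r : R).
Hypothesis Heps : 0 < eps.
Hypothesis Hc_eps : eps + Cmod c < 1.
Hypothesis Hc_r : Cmod c < r.
Hypothesis Hr : r < 1.

Let rho s := (1 - s) * eps + s * r.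

(* The straight-line homotopy from the circle [|w - c| = eps] (at s = 0) to the circle
   [|w| = r] (at s = 1); it stays in the disk and never meets [c]. *)
Definition annulus_map s t := (RtoC (rho s) * cis t + RtoC (1 - s) * c)%C.
Definition annulus_ds (s t : R) := (RtoC (r - eps) * cis t - c)%C.
Definition annulus_dt s t := (RtoC (rho s) * (Ci * cis t))%C.

Lemma annulus_radius_bounds s : 0 <= s <= 1 -> 0 < rho s <= 1.
Proof. intros Hs. pose proof (Cmod_ge_0 c). unfold rho. split; nra. Qed.

Lemma annulus_map_in_disk s t : 0 <= s <= 1 -> Cmod (annulus_map s t) < 1.
Proof.
  intros Hs. unfold annulus_map. eapply Rle_lt_trans; [apply Cmod_triangle|].
  pose proof (annulus_radius_bounds s Hs).
  rewrite !Cmod_RtoC_mult, Cmod_cis, !Rabs_pos_eq by lra.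
  assert (0 < (1 - s) * (1 - (eps + Cmod c)) + s * (1 - r)).
  { destruct (Req_dec s 1) as [->|Hs1]; [lra|].
    assert (0 < (1 - s) * (1 - (eps + Cmod c))) by (apply Rmult_lt_0_compat; lra). nra. }
  unfold rho in *. lra.
Qed.

Lemma annulus_map_neq_center s t : 0 <= s <= 1 -> annulus_map s t <> c.
Proof.
  intros Hs E. pose proof (annulus_radius_bounds s Hs) as Hrho.
  pose proof (Cmod_reverse_triangle (rho s * cis t) (s * c)) as H.
  replace (rho s * cis t - s * c)%C with (annulus_map s t - c)%C in H
    by (unfold annulus_map; rewrite RtoC_minus; C_ring).
  rewrite E, !Cmod_RtoC_mult, Cmod_cis, !Rabs_pos_eq in H by lra.
  unfold Cminus in H. rewrite Cplus_opp_r, Cmod_0 in H.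
  unfold rho in *. destruct (Req_dec s 0) as [->|Hs0]; [lra|].
  assert (0 < s * (r - Cmod c)) by (apply Rmult_lt_0_compat; lra).
  assert (0 <= (1 - s) * eps) by (apply Rmult_le_pos; lra). lra.
Qed.

Lemma annulus_map_ds s t : is_path_derive (fun s => annulus_map s t) s (annulus_ds s t).
Proof.
  apply (is_derive_ext (fun s => plus (scal (rho s) (cis t : C_R_NormedModule))
                                      (scal (1 - s) (c : C_R_NormedModule)))).
  { intros u. rewrite !scal_C_R. reflexivity. }
  eapply filterdiff_ext_lin.
  { apply (is_derive_plus (V := C_R_NormedModule)).
    - apply (is_derive_scal_l (V := C_R_NormedModule) rho s (r - eps)).
      unfold rho. auto_derive; [easy | ring].
    - apply (is_derive_scal_l (V := C_R_NormedModule) (fun s => 1 - s) s (-1)).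
      auto_derive; [easy | ring]. }
  intros y. rewrite !scal_C_R. unfold annulus_ds. change (plus ?a ?b) with (a + b)%C. C_ring.
Qed.

Lemma annulus_map_dt s t : is_path_derive (fun t => annulus_map s t) t (annulus_dt s t).
Proof.
  exact (is_path_derive_comp _ cis t _ _ (is_Cderive_affine (RtoC (rho s)) _ _)
           (is_path_derive_cis t)).
Qed.

Lemma annulus_map_lipschitz s t s' t' : 0 <= s <= 1 -> 0 <= s' <= 1 ->
  Cmod (annulus_map s t - annulus_map s' t') <=
  (Rabs (r - eps) + Cmod c + sqrt 2) * (Rabs (s - s') + Rabs (t - t')).
Proof.
  intros Hs Hs'.
  replace (annulus_map s t - annulus_map s' t')%C with
    (RtoC ((s - s') * (r - eps)) * cis t
     + (RtoC (rho s') * (cis t - cis t') - RtoC (s - s') * c))%C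
    by (unfold annulus_map, rho; rewrite !RtoC_mult, !RtoC_minus, !RtoC_plus, !RtoC_mult,
          !RtoC_minus; C_ring).
  eapply Rle_trans; [apply Cmod_triangle|]. unfold Cminus.
  eapply Rle_trans; [apply Rplus_le_compat_l, Cmod_triangle|].
  rewrite Cmod_opp, !Cmod_RtoC_mult, Cmod_cis, Rabs_mult.
  pose proof (Cmod_lipschitz_cis t t'). pose proof (annulus_radius_bounds s' Hs').
  pose proof (sqrt_pos 2). pose proof (Rabs_pos (s - s')). pose proof (Rabs_pos (t - t')).
  pose proof (Rabs_pos (r - eps)). pose proof (Cmod_ge_0 c).
  pose proof (Cmod_ge_0 (cis t - cis t')).
  rewrite (Rabs_pos_eq (rho s')) by lra. change (cis t + - cis t')%C with (cis t - cis t')%C.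
  assert (rho s' * Cmod (cis t - cis t') <= sqrt 2 * Rabs (t - t'))
    by (apply Rle_trans with (1 * Cmod (cis t - cis t')); [apply Rmult_le_compat_r|]; lra).
  nra.
Qed.

Lemma annulus_d_bound s t : 0 <= s <= 1 ->
  Cmod (annulus_ds s t) <= Rabs (r - eps) + Cmod c + 1 /\
  Cmod (annulus_dt s t) <= Rabs (r - eps) + Cmod c + 1.
Proof.
  intros Hs. pose proof (annulus_radius_bounds s Hs).
  pose proof (Rabs_pos (r - eps)). pose proof (Cmod_ge_0 c). unfold annulus_ds, annulus_dt. split.
  - unfold Cminus. eapply Rle_trans; [apply Cmod_triangle|].
    rewrite Cmod_opp, Cmod_RtoC_mult, Cmod_cis. lra.
  - rewrite !Cmod_mult, Cmod_Ci, Cmod_cis, Cmod_R, Rabs_pos_eq by lra. lra.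
Qed.

(* Goursat's theorem for [annulus_map]: the edges [t = 0] and [t = 2 pi] cancel, and the
   edges [s = 1] and [s = 0] are the two circles. *)
Theorem circle_integral_deform (K : C -> C) :
  (forall w, Cmod w < 1 -> w <> c -> ex_Cderive K w) ->
  circle_integral K 0 r = circle_integral K c eps.
Proof.
  intros HK. pose proof PI_RGT_0.
  pose proof (rect_integral_holo annulus_map annulus_ds annulus_dt 0 1 0 (2 * PI)
    (Rabs (r - eps) + Cmod c + sqrt 2) (Rabs (r - eps) + Cmod c + 1) ltac:(lra) ltac:(lra)) as G.
  unfold in_rect, holo_on_rect, rect_integral, edge_s, edge_t in G.
  specialize (G (fun s t _ => annulus_map_ds s t) (fun s t _ => annulus_map_dt s t)).
  specialize (G (fun s t _ => continuous_const _ _)).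
  specialize (G (fun s t _ => continuous_Cmult (fun _ => RtoC (rho s)) (fun t => Ci * cis t)%C t
    (continuous_const _ _) (continuous_Cmult (fun _ => Ci) cis t (continuous_const _ _)
                                             (continuous_cis t)))).
  specialize (G (fun s t s' t' Hst Hst' =>
                   annulus_map_lipschitz s t s' t' (proj1 Hst) (proj1 Hst'))).
  specialize (G (fun s t Hst => annulus_d_bound s t (proj1 Hst)) K).
  specialize (G (fun s t Hst => HK _ (annulus_map_in_disk s t (proj1 Hst))
                                     (annulus_map_neq_center s t (proj1 Hst)))).
  assert (Eperiodic : CInt (fun s => K (annulus_map s (2 * PI)) * annulus_ds s (2 * PI))%C 0 1 =
                      CInt (fun s => K (annulus_map s 0) * annulus_ds s 0)%C 0 1).
  { apply (RInt_ext (V := C_R_CompleteNormedModule)). intros s _.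
    unfold annulus_map, annulus_ds. now rewrite cis_2PI. }
  assert (Eouter : CInt (fun t => K (annulus_map 1 t) * annulus_dt 1 t)%C 0 (2 * PI) =
                   circle_integral K 0 r).
  { apply (RInt_ext (V := C_R_CompleteNormedModule)). intros t _.
    unfold annulus_map, annulus_dt, rho.
    replace ((1 - 1) * eps + 1 * r) with r by ring. replace (1 - 1) with 0 by ring.
    do 2 f_equal. C_ring. }
  assert (Einner : CInt (fun t => K (annulus_map 0 t) * annulus_dt 0 t)%C 0 (2 * PI) =
                   circle_integral K c eps).
  { apply (RInt_ext (V := C_R_CompleteNormedModule)). intros t _.
    unfold annulus_map, annulus_dt, rho.
    replace ((1 - 0) * eps + 0 * r) with eps by ring. replace (1 - 0) with 1 by ring.
    do 2 f_equal. C_ring. }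
  rewrite Eperiodic, Eouter, Einner in G.
  set (e := CInt (fun s => K (annulus_map s 0) * annulus_ds s 0)%C 0 1) in G.
  replace (circle_integral K 0 r)
    with ((e + circle_integral K 0 r - e - circle_integral K c eps) + circle_integral K c eps)%C
    by ring.
  rewrite G. ring.
Qed.

End Annulus.

Theorem circle_integral_pole (K : C -> C) (c a : C) (r : R) :
  Cmod c < r -> r < 1 -> (forall w, Cmod w < 1 -> w <> c -> ex_Cderive K w) ->
  (forall eta, 0 < eta -> exists delta, 0 < delta /\
     forall w, w <> c -> Cmod (w - c) < delta -> Cmod ((w - c) * K w - a) <= eta) ->
  circle_integral K 0 r = (RtoC (2 * PI) * Ci * a)%C.
Proof.
  intros Hcr Hr HK Hlim. pose proof PI_RGT_0. pose proof (Cmod_ge_0 c).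
  apply Ceq_minus, Cmod_eq_0, Rle_antisym; [|apply Cmod_ge_0].
  apply le_epsilon. intros eta Heta. rewrite Rplus_0_l.
  destruct (Hlim (eta / (2 * PI)) ltac:(apply Rdiv_lt_0_compat; lra)) as (delta & Hdelta & Hw).
  set (eps := Rmin (delta / 2) ((r - Cmod c) / 2)).
  assert (Heps : 0 < eps) by (apply Rmin_pos; lra).
  assert (eps <= delta / 2 /\ eps <= (r - Cmod c) / 2) as [He1 He2]
    by (split; [apply Rmin_l | apply Rmin_r]).
  rewrite (circle_integral_deform c eps r) by (auto; lra).
  replace eta with (2 * PI * (eta / (2 * PI))) by (field; lra).
  apply circle_integral_near_pole; [exact Heps | |]; intros t;
    pose proof (Cmod_circle c eps t ltac:(lra)) as Hmod.
  - apply HK.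
    + eapply Rle_lt_trans; [apply Cmod_triangle|].
      rewrite Cmod_RtoC_mult, Cmod_cis, Rabs_pos_eq by lra. lra.
    + intros E. rewrite E in Hmod. unfold Cminus in Hmod. rewrite Cplus_opp_r, Cmod_0 in Hmod. lra.
  - apply Hw; [|lra]. intros E. rewrite E in Hmod.
    unfold Cminus in Hmod. rewrite Cplus_opp_r, Cmod_0 in Hmod. lra.
Qed.

Corollary cauchy_integral_formula (h : C -> C) (z : C) (r : R) :
  Cmod z < r -> r < 1 -> (forall w, Cmod w < 1 -> ex_Cderive h w) ->
  circle_integral (fun w => h w / (w - z))%C 0 r = (RtoC (2 * PI) * Ci * h z)%C.
Proof.
  intros Hzr Hr Hh. apply (circle_integral_pole _ z); [auto | auto | |].
  - intros w Hw Hwz. apply ex_Cderive_div; [now apply Hh | | now apply Cminus_eq_contra].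
    apply ex_Cderive_minus; [apply ex_Cderive_id | apply ex_Cderive_const].
  - intros eta Heta.
    destruct (ex_Cderive_continuous_at h z (Hh z ltac:(lra)) eta Heta) as (d & Hd & Hc).
    exists d. split; [exact Hd|]. intros w Hwz Hw.
    replace ((w - z) * (h w / (w - z)))%C with (h w) by (field; now apply Cminus_eq_contra).
    now apply Hc.
Qed.

(** * The Schwarz lemma *)

Lemma pow_bounded_le_1 (q B : R) : 0 <= q -> (forall n, q ^ n <= B) -> q <= 1.
Proof.
  intros Hq HB. apply Rnot_lt_le. intros Hq1.
  destruct (Pow_x_infinity q ltac:(rewrite Rabs_pos_eq; lra) (B + 1)) as [n Hn].
  specialize (Hn n (Nat.le_refl n)). specialize (HB n).
  rewrite Rabs_pos_eq in Hn by (apply pow_le; lra). lra.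
Qed.

Section Schwarz.

Variable u : C -> C.
Hypothesis u_holo : forall w, Cmod w < 1 -> ex_Cderive u w.
Hypothesis u_bound : forall w, Cmod w < 1 -> Cmod (u w) < 1.
Hypothesis u_0 : u 0%C = 0%C.

Lemma u_linear_near_0 : exists A delta, 0 <= A /\ 0 < delta /\
  forall w, Cmod w < delta -> Cmod (u w) <= A * Cmod w.
Proof.
  destruct (u_holo 0%C ltac:(rewrite Cmod_0; lra)) as [b Hb].
  destruct (is_Cderive_locally_lipschitz u (RtoC 0) b Hb) as (d & Hd & Hlin).
  exists (Cmod b + 1), d. pose proof (Cmod_ge_0 b). repeat split; [lra | exact Hd|].
  intros w Hw. specialize (Hlin w). rewrite u_0 in Hlin.
  replace (w - 0)%C with w in Hlin by ring. replace (u w - 0)%C with (u w) in Hlin by ring.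
  now apply Hlin.
Qed.

Lemma Cmod_u_pow_div_pow_le (z : C) m n : (m < n)%nat -> exists B delta, 0 <= B /\ 0 < delta /\
  forall w : C, w <> 0%C -> Cmod w < delta -> Cmod (z ^ m * u w ^ n / w ^ m)%C <= B * Cmod w.
Proof.
  intros Hm. destruct u_linear_near_0 as (A & d & HA & Hd & Hu).
  exists (Cmod z ^ m * A ^ S m), (Rmin d 1).
  split; [apply Rmult_le_pos; apply pow_le; [apply Cmod_ge_0 | exact HA]|].
  split; [apply Rmin_pos; lra|]. intros w Hw0 Hw.
  pose proof (Rmin_l d 1). pose proof (Rmin_r d 1). pose proof (proj1 (Cmod_gt_0 w) Hw0).
  rewrite Cmod_div, Cmod_mult, !Cmod_pow by now apply Cpow_nz.
  set (X := Cmod (u w)) in *. set (Y := Cmod w) in *.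
  assert (HX : 0 <= X /\ X < 1 /\ X <= A * Y).
  { split; [apply Cmod_ge_0|]. split; [apply u_bound | apply Hu]; fold Y; lra. }
  replace n with (S (n - S m) + m)%nat by lia. rewrite pow_add.
  assert (Hk : X ^ S (n - S m) <= A * Y).
  { simpl. assert (X ^ (n - S m) <= 1 ^ (n - S m)) by (apply pow_incr; lra).
    pose proof (pow_le X (n - S m) ltac:(lra)). rewrite pow1 in *. nra. }
  assert (Hq : (X / Y) ^ m <= A ^ m).
  { apply pow_incr. split; [apply Rdiv_le_0_compat; lra|].
    apply Rmult_le_reg_r with Y; [lra|]. unfold Rdiv.
    rewrite Rmult_assoc, Rinv_l, Rmult_1_r by (apply Rgt_not_eq; lra). lra. }
  replace (Cmod z ^ m * (X ^ S (n - S m) * X ^ m) / Y ^ m)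
    with (Cmod z ^ m * X ^ S (n - S m) * (X / Y) ^ m)
    by (unfold Rdiv; rewrite Rpow_mult_distr, pow_inv; field; apply pow_nonzero; lra).
  pose proof (pow_le (Cmod z) m (Cmod_ge_0 z)).
  pose proof (pow_le (X / Y) m ltac:(apply Rdiv_le_0_compat; lra)).
  apply Rle_trans with (Cmod z ^ m * (A * Y) * A ^ m); [|right; simpl; ring].
  apply Rmult_le_compat; [apply Rmult_le_pos; [|apply pow_le]; lra | lra | | exact Hq].
  apply Rmult_le_compat_l; lra.
Qed.

Section Schwarz_integral.

Variables (z : C) (r : R) (n : nat).
Hypothesis Hz : z <> 0%C.
Hypothesis Hzr : Cmod z < r.
Hypothesis Hr : r < 1.

(* [schwarz_integral 0] is [2 pi i u(z)^n] by Cauchy's formula, the integral does not change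
   while [m <= n] because [u^n / w^(m+1)] is bounded near 0, and [schwarz_integral n] is
   [O((|z| / r)^n)].  Taking n-th roots and letting [r -> 1] gives [|u z| <= |z|]. *)
Definition schwarz_integral m :=
  circle_integral (fun w => z ^ m * u w ^ n / (w ^ m * (w - z)))%C 0 r.

Lemma circle_point_facts t :
  Cmod (0 + r * cis t)%C = r /\ (r * cis t)%C <> 0%C /\ (r * cis t - z)%C <> 0%C.
Proof.
  pose proof (Cmod_ge_0 z). pose proof (Cmod_circle 0 r t ltac:(lra)) as E.
  replace (0 + r * cis t - 0)%C with (r * cis t)%C in E by ring.
  split; [now replace (0 + r * cis t)%C with (r * cis t)%C by ring|]. split; intros E'.
  - rewrite E', Cmod_0 in E. lra.
  - replace (r * cis t)%C with (r * cis t - z + z)%C in E by ring.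
    rewrite E', Cplus_0_l in E. lra.
Qed.

Lemma ex_Cderive_schwarz_integrand m t :
  ex_Cderive (fun w => z ^ m * u w ^ n / (w ^ m * (w - z)))%C (0 + r * cis t)%C.
Proof.
  destruct (circle_point_facts t) as (Hm & H0 & Hwz).
  replace (0 + r * cis t)%C with (r * cis t)%C in * by ring.
  apply ex_Cderive_div.
  - apply ex_Cderive_mult; [apply ex_Cderive_const | apply ex_Cderive_pow, u_holo; lra].
  - apply ex_Cderive_mult; [apply ex_Cderive_pow, ex_Cderive_id|].
    apply ex_Cderive_minus; [apply ex_Cderive_id | apply ex_Cderive_const].
  - apply Cmult_neq_0; [now apply Cpow_nz | exact Hwz].
Qed.

Lemma schwarz_integral_0 : schwarz_integral 0 = (RtoC (2 * PI) * Ci * u z ^ n)%C.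
Proof.
  unfold schwarz_integral. rewrite (circle_integral_ext _ (fun w => u w ^ n / (w - z))%C).
  - apply cauchy_integral_formula; [lra | lra |]. intros w Hw. now apply ex_Cderive_pow, u_holo.
  - intros t. destruct (circle_point_facts t) as (_ & _ & Hwz). simpl Cpow. field.
    replace (0 + r * cis t)%C with (r * cis t)%C by ring. exact Hwz.
Qed.

Lemma schwarz_integral_succ m : (m < n)%nat -> schwarz_integral m = schwarz_integral (S m).
Proof.
  intros Hm. apply Ceq_minus. unfold schwarz_integral.
  rewrite <- circle_integral_minus by (intros; apply ex_Cderive_schwarz_integrand).
  rewrite (circle_integral_ext _ (fun w => z ^ m * u w ^ n / w ^ S m)%C).
  2: { intros t. destruct (circle_point_facts t) as (_ & H0 & Hwz).
       replace (0 + r * cis t)%C with (r * cis t)%C by ring. simpl Cpow.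
       field. repeat split; [now apply Cpow_nz | apply cis_neq_0 | | exact Hwz].
       intros E. apply RtoC_inj in E. pose proof (Cmod_ge_0 z). lra. }
  transitivity (RtoC (2 * PI) * Ci * RtoC 0)%C; [|ring].
  apply (circle_integral_pole _ (RtoC 0));
    [rewrite Cmod_0; pose proof (Cmod_ge_0 z); lra | lra | |].
  - intros w Hw Hw0.
    apply ex_Cderive_div; [| apply ex_Cderive_pow, ex_Cderive_id | now apply Cpow_nz].
    apply ex_Cderive_mult; [apply ex_Cderive_const | apply ex_Cderive_pow, u_holo, Hw].
  - intros eta Heta. destruct (Cmod_u_pow_div_pow_le z m n Hm) as (B & d & HB & Hd & Hbound).
    exists (Rmin d (eta / (B + 1))). split; [apply Rmin_pos; [lra | apply Rdiv_lt_0_compat; lra]|].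
    intros w Hw0 Hw. replace (w - 0)%C with w in * by ring.
    pose proof (Rmin_l d (eta / (B + 1))). pose proof (Rmin_r d (eta / (B + 1))).
    replace (w * (z ^ m * u w ^ n / w ^ S m) - 0)%C with (z ^ m * u w ^ n / w ^ m)%C
      by (simpl Cpow; field; split; [now apply Cpow_nz | exact Hw0]).
    eapply Rle_trans; [apply Hbound; [exact Hw0 | lra]|].
    apply Rle_trans with (B * (eta / (B + 1))); [apply Rmult_le_compat_l; lra|].
    apply Rmult_le_reg_r with (B + 1); [lra|].
    replace (B * (eta / (B + 1)) * (B + 1)) with (B * eta) by (field; lra). nra.
Qed.

Lemma Cmod_schwarz_integral_n :
  Cmod (schwarz_integral n) <= 2 * PI * (r * (Cmod z ^ n / (r ^ n * (r - Cmod z)))).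
Proof.
  unfold schwarz_integral. apply (Cmod_circle_integral_le _ (RtoC 0) r);
    [pose proof (Cmod_ge_0 z); lra | intros; apply ex_Cderive_schwarz_integrand |].
  intros t. destruct (circle_point_facts t) as (Hm & H0 & Hwz).
  pose proof (Cmod_reverse_triangle (0 + r * cis t) z) as Hdist. rewrite Hm in Hdist.
  assert (Hwz' : (0 + r * cis t - z)%C <> 0%C)
    by (now replace (0 + r * cis t - z)%C with (r * cis t - z)%C by ring).
  rewrite Cmod_div by (apply Cmult_neq_0; [apply Cpow_nz; now rewrite Cplus_0_l | exact Hwz']).
  rewrite !Cmod_mult, !Cmod_pow, Hm.
  assert (Hu1 : Cmod (u (0 + r * cis t)%C) ^ n <= 1).
  { rewrite <- (pow1 n). apply pow_incr. split; [apply Cmod_ge_0|]. apply Rlt_le, u_bound. lra. }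
  pose proof (pow_lt r n ltac:(pose proof (Cmod_ge_0 z); lra)).
  pose proof (pow_le (Cmod z) n (Cmod_ge_0 z)).
  pose proof (pow_le (Cmod (u (0 + r * cis t)%C)) n (Cmod_ge_0 _)).
  unfold Rdiv. apply Rmult_le_compat; [nra | | nra |].
  - apply Rlt_le, Rinv_0_lt_compat. apply Rmult_lt_0_compat; lra.
  - apply Rinv_le_contravar; [apply Rmult_lt_0_compat; lra|]. apply Rmult_le_compat_l; lra.
Qed.

Lemma schwarz_power_bound : (r * Cmod (u z) / Cmod z) ^ n <= r / (r - Cmod z).
Proof.
  pose proof PI_RGT_0. pose proof (proj1 (Cmod_gt_0 z) Hz).
  assert (Hall : forall m, (m <= n)%nat -> schwarz_integral 0 = schwarz_integral m).
  { induction m as [|m IH]; intros Hm; [reflexivity|].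
    rewrite IH by lia. apply schwarz_integral_succ. lia. }
  pose proof Cmod_schwarz_integral_n as Hb.
  rewrite <- (Hall n (Nat.le_refl n)), schwarz_integral_0 in Hb.
  rewrite !Cmod_mult, Cmod_R, Cmod_Ci, Cmod_pow, Rabs_pos_eq in Hb by lra.
  pose proof (pow_lt r n ltac:(lra)). pose proof (pow_lt (Cmod z) n ltac:(lra)).
  replace ((r * Cmod (u z) / Cmod z) ^ n) with (r ^ n / Cmod z ^ n * Cmod (u z) ^ n)
    by (unfold Rdiv; rewrite !Rpow_mult_distr, pow_inv; ring).
  apply Rle_trans with (r ^ n / Cmod z ^ n * (r * (Cmod z ^ n / (r ^ n * (r - Cmod z))))).
  - apply Rmult_le_compat_l; [apply Rdiv_le_0_compat; lra|].
    apply Rmult_le_reg_l with (2 * PI); lra.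
  - right. field. repeat split; lra.
Qed.

End Schwarz_integral.

Theorem schwarz_lemma z : Cmod z < 1 -> Cmod (u z) <= Cmod z.
Proof.
  intros Hz1. destruct (Ceq_dec z 0) as [->|Hz]; [rewrite u_0, Cmod_0; lra|].
  pose proof (proj1 (Cmod_gt_0 z) Hz) as Hz0. pose proof (Cmod_ge_0 (u z)).
  assert (Hr : forall r, Cmod z < r < 1 -> r * Cmod (u z) <= Cmod z).
  { intros r [Hzr Hr1].
    assert (Hq : r * Cmod (u z) / Cmod z <= 1).
    { apply (pow_bounded_le_1 _ (r / (r - Cmod z))); [apply Rdiv_le_0_compat; nra|].
      intros n. now apply schwarz_power_bound. }
    apply Rmult_le_compat_r with (r := Cmod z) in Hq; [|lra].
    replace (r * Cmod (u z) / Cmod z * Cmod z) with (r * Cmod (u z)) in Hq by (field; lra).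
    lra. }
  apply Rnot_lt_le. intros Hlt. set (q := Cmod z / Cmod (u z)).
  assert (Hq : q < 1 /\ q * Cmod (u z) = Cmod z).
  { unfold q. split; [|field; lra]. apply Rmult_lt_reg_r with (Cmod (u z)); [lra|].
    replace (Cmod z / Cmod (u z) * Cmod (u z)) with (Cmod z) by (field; lra). lra. }
  set (r := (1 + Rmax (Cmod z) q) / 2).
  pose proof (Rmax_l (Cmod z) q). pose proof (Rmax_r (Cmod z) q).
  assert (Hmax : Rmax (Cmod z) q < 1) by (apply Rmax_lub_lt; lra).
  specialize (Hr r ltac:(unfold r; lra)).
  assert (q * Cmod (u z) < r * Cmod (u z)) by (apply Rmult_lt_compat_r; unfold r; lra).
  lra.
Qed.

End Schwarz.

(** * The class P and the conditions of the theorem *)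

Lemma one_minus_neq_0 (v : C) : Cmod v < 1 -> (1 - v)%C <> 0%C.
Proof.
  intros Hv E. assert (v = RtoC 1) by (replace v with (1 - (1 - v))%C by ring; rewrite E; ring).
  subst v. rewrite Cmod_1 in Hv. lra.
Qed.

Lemma ell_Re_Im (v : C) : Cmod v < 1 ->
  Re (ell v) = (1 - Cmod v ^ 2) / Cmod (1 - v) ^ 2 /\ Im (ell v) = 2 * Im v / Cmod (1 - v) ^ 2.
Proof.
  intros Hv. pose proof (one_minus_neq_0 v Hv) as Hv1.
  assert (Hd : Cmod (1 - v) ^ 2 <> 0) by (apply pow_nonzero, Rgt_not_eq, Cmod_gt_0, Hv1).
  rewrite !Cmod2_alt in *. destruct v as [x y]. unfold ell, Re, Im in *.
  unfold Cdiv, Cinv, Cmult, Cplus, Cminus, Copp in *; simpl in *.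
  split; field; contradict Hd; nra.
Qed.

Lemma Re_mult_ell (F v : C) : Cmod v < 1 ->
  Re (F * ell v)%C = (Re F * (1 - Cmod v ^ 2) - 2 * Im F * Im v) / Cmod (1 - v) ^ 2.
Proof.
  intros Hv. destruct (ell_Re_Im v Hv) as [E1 E2].
  assert (Hd : Cmod (1 - v) <> 0) by (apply Rgt_not_eq, Cmod_gt_0, one_minus_neq_0, Hv).
  rewrite re_mult, E1, E2. field. exact Hd.
Qed.

Lemma Re_ell_pos (v : C) : Cmod v < 1 -> 0 < Re (ell v).
Proof.
  intros Hv. rewrite (proj1 (ell_Re_Im v Hv)). pose proof (Cmod_ge_0 v).
  apply Rdiv_lt_0_compat; [nra|]. apply pow_lt, Cmod_gt_0, one_minus_neq_0, Hv.
Qed.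

(* By [Re_mult_ell_pos] and [sector_bound_of_rotations], this says that multiplication by
   [F] maps the disk [ell (|v| <= t)], of centre (1 + t^2)/(1 - t^2) and radius
   2t/(1 - t^2), into the right half-plane. *)
Definition sector_bound (t : R) (F : C) := 2 * t * Rabs (Im F) < Re F * (1 - t ^ 2).

Lemma Re_mult_ell_pos (F v : C) (t : R) : 0 < Re F -> Cmod v <= t -> t < 1 ->
  sector_bound t F -> 0 < Re (F * ell v)%C.
Proof.
  intros HRe Hv Ht HF. unfold sector_bound in HF. assert (Hv1 : Cmod v < 1) by lra.
  rewrite Re_mult_ell by exact Hv1.
  apply Rdiv_lt_0_compat; [|apply pow_lt, Cmod_gt_0, one_minus_neq_0, Hv1].
  pose proof (Cmod_ge_0 v). pose proof (Rabs_pos (Im F)).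
  assert (Im F * Im v <= Rabs (Im F) * Cmod v).
  { eapply Rle_trans; [apply Rle_abs|]. rewrite Rabs_mult.
    apply Rmult_le_compat_l; [apply Rabs_pos|].
    apply Rle_trans with (Rmax (Rabs (Re v)) (Rabs (Im v))); [apply Rmax_r | apply Rmax_Cmod]. }
  assert (Re F * (1 - t ^ 2) <= Re F * (1 - Cmod v ^ 2)) by (apply Rmult_le_compat_l; nra).
  assert (Rabs (Im F) * Cmod v <= Rabs (Im F) * t) by (apply Rmult_le_compat_l; lra).
  lra.
Qed.

(* Rotating [w] onto [+- i |w|] (the sign of [Im F]) attains the worst case in
   [Re_mult_ell]. *)
Lemma sector_bound_of_rotations (F w : C) : 0 < Re F -> Cmod w < 1 ->
  (forall lam : C, Cmod lam = 1 -> 0 < Re (F * ell (lam * w))%C) -> sector_bound (Cmod w) F.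
Proof.
  intros HRe Hw Hrot. unfold sector_bound.
  pose proof (Cmod_ge_0 w) as Ht. set (t := Cmod w) in *.
  destruct (Ceq_dec w 0) as [->|Hw0]; [unfold t; rewrite Cmod_0; simpl; nra|].
  set (sg := if Rle_dec 0 (Im F) then 1 else -1).
  assert (Hsg : Rabs sg = 1 /\ sg * Im F = Rabs (Im F)).
  { unfold sg. destruct (Rle_dec 0 (Im F)).
    - rewrite Rabs_R1, Rabs_pos_eq by auto. split; ring.
    - rewrite (Rabs_left (-1)), (Rabs_left (Im F)) by lra. split; ring. }
  set (v := (RtoC (sg * t) * Ci)%C).
  assert (Hv : Cmod v = t).
  { unfold v. rewrite Cmod_mult, Cmod_Ci, Cmod_R, Rabs_mult, (proj1 Hsg), (Rabs_pos_eq t) by lra.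
    ring. }
  assert (Hlam : Cmod (v / w) = 1).
  { rewrite Cmod_div by exact Hw0. fold t. rewrite Hv. field. apply Rgt_not_eq, Cmod_gt_0, Hw0. }
  specialize (Hrot (v / w)%C Hlam). replace (v / w * w)%C with v in Hrot by (field; exact Hw0).
  rewrite Re_mult_ell, Hv in Hrot by lra.
  assert (HIm : Im v = sg * t) by (unfold v, Ci, Im; simpl; ring).
  rewrite HIm in Hrot.
  assert (Hpos : 0 < Cmod (1 - v) ^ 2) by (apply pow_lt, Cmod_gt_0, one_minus_neq_0; lra).
  apply Rmult_lt_compat_r with (r := Cmod (1 - v) ^ 2) in Hrot; [|exact Hpos].
  unfold Rdiv in Hrot. rewrite Rmult_0_l, Rmult_assoc, Rinv_l, Rmult_1_r in Hrot by lra.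
  replace (2 * Im F * (sg * t)) with (2 * t * (sg * Im F)) in Hrot by ring.
  rewrite (proj2 Hsg) in Hrot. lra.
Qed.

Lemma sector_bound_iff_ratio (F : C) (t : R) : 0 < Re F ->
  (2 * t * Rabs (Im F / Re F) < 1 - t ^ 2 <-> sector_bound t F).
Proof.
  intros HRe. unfold sector_bound. rewrite Rabs_div, (Rabs_pos_eq (Re F)) by lra.
  replace (2 * t * (Rabs (Im F) / Re F)) with (2 * t * Rabs (Im F) / Re F) by (field; lra).
  split; intros H.
  - apply Rmult_lt_compat_r with (r := Re F) in H; [|exact HRe].
    replace (2 * t * Rabs (Im F) / Re F * Re F) with (2 * t * Rabs (Im F)) in H by (field; lra).
    lra.
  - apply Rmult_lt_reg_r with (Re F); [exact HRe|].
    replace (2 * t * Rabs (Im F) / Re F * Re F) with (2 * t * Rabs (Im F)) by (field; lra). lra.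
Qed.

Lemma sector_bound_ell_iff (w : C) (t : R) : Cmod w < 1 ->
  (4 * t * Rabs (Im w) < (1 - Cmod w ^ 2) * (1 - t ^ 2) <-> sector_bound t (ell w)).
Proof.
  intros Hw. unfold sector_bound. destruct (ell_Re_Im w Hw) as [E1 E2]. rewrite E1, E2.
  assert (Hd1 : 0 < Cmod (1 - w)) by (apply Cmod_gt_0, one_minus_neq_0, Hw).
  assert (Hd : 0 < Cmod (1 - w) ^ 2) by (apply pow_lt, Hd1).
  rewrite Rabs_div, Rabs_mult, (Rabs_pos_eq 2), (Rabs_pos_eq (Cmod (1 - w) ^ 2)) by lra.
  replace (2 * t * (2 * Rabs (Im w) / Cmod (1 - w) ^ 2))
    with (4 * t * Rabs (Im w) / Cmod (1 - w) ^ 2) by (field; lra).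
  replace ((1 - Cmod w ^ 2) / Cmod (1 - w) ^ 2 * (1 - t ^ 2))
    with ((1 - Cmod w ^ 2) * (1 - t ^ 2) / Cmod (1 - w) ^ 2)
    by (field; lra).
  unfold Rdiv. pose proof (Rinv_0_lt_compat _ Hd) as Hinv. split; intros H.
  - now apply Rmult_lt_compat_r.
  - now apply Rmult_lt_reg_r in H.
Qed.

Lemma angle_identities (t : R) : 0 <= t < 1 ->
  PI / 2 - asin (2 * t / (1 + t ^ 2)) = PI / 2 - atan (2 * t / (1 - t ^ 2)) /\
  PI / 2 - atan (2 * t / (1 - t ^ 2)) = atan_ratio t.
Proof.
  intros Ht. assert (H1 : 0 < 1 + t ^ 2) by nra. assert (H2 : 0 < 1 - t ^ 2) by nra.
  split.
  - rewrite asin_atan.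
    + do 2 f_equal. replace (1 - (2 * t / (1 + t ^ 2))²) with (((1 - t ^ 2) / (1 + t ^ 2))²)
        by (unfold Rsqr; field; lra).
      rewrite sqrt_Rsqr by (apply Rdiv_le_0_compat; lra). field. split; lra.
    + split; [assert (0 <= 2 * t / (1 + t ^ 2)) by (apply Rdiv_le_0_compat; lra); lra|].
      apply Rmult_lt_reg_r with (1 + t ^ 2); [exact H1|].
      replace (2 * t / (1 + t ^ 2) * (1 + t ^ 2)) with (2 * t) by (field; lra). nra.
  - unfold atan_ratio. destruct (Req_EM_T t 0) as [->|Hn].
    + replace (2 * 0 / (1 - 0 ^ 2)) with 0 by (simpl; field). rewrite atan_0. ring.
    + replace ((1 - t ^ 2) / (2 * t)) with (/ (2 * t / (1 - t ^ 2))) by (field; lra).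
      rewrite atan_inv by (apply Rdiv_lt_0_compat; lra). ring.
Qed.

Lemma Rabs_atan (x : R) : Rabs (atan x) = atan (Rabs x).
Proof.
  destruct (Rle_dec 0 x) as [Hx|Hx].
  - rewrite (Rabs_pos_eq x) by exact Hx. apply Rabs_pos_eq.
    rewrite <- atan_0.
    destruct Hx as [Hx| <-]; [left; now apply atan_increasing | right; reflexivity].
  - rewrite (Rabs_left x), atan_opp by lra. apply Rabs_left.
    rewrite <- atan_0. apply atan_increasing. lra.
Qed.

Lemma sector_bound_iff_arg (F : C) (t : R) : 0 < Re F -> 0 <= t < 1 ->
  (Rabs (Carg F) < PI / 2 - asin (2 * t / (1 + t ^ 2)) <-> sector_bound t F).
Proof.
  intros HRe Ht. rewrite <- sector_bound_iff_ratio by exact HRe.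
  destruct (angle_identities t Ht) as [-> ->].
  assert (HC : Carg F = atan (Im F / Re F))
    by (unfold Carg; destruct (Rlt_dec 0 (Re F)); [reflexivity | lra]).
  rewrite HC, Rabs_atan. unfold atan_ratio. set (q := Rabs (Im F / Re F)).
  assert (Hq : 0 <= q) by apply Rabs_pos.
  destruct (Req_EM_T t 0) as [->|Hn].
  - pose proof (atan_bound q). split; intros _; lra.
  - assert (H2 : 0 < 1 - t ^ 2) by nra.
    assert (E : 2 * t * q < 1 - t ^ 2 <-> q < (1 - t ^ 2) / (2 * t)).
    { split; intros H.
      - apply Rmult_lt_reg_r with (2 * t); [lra|].
        replace ((1 - t ^ 2) / (2 * t) * (2 * t)) with (1 - t ^ 2) by (field; lra). lra.
      - apply Rmult_lt_compat_r with (r := 2 * t) in H; [|lra].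
        replace ((1 - t ^ 2) / (2 * t) * (2 * t)) with (1 - t ^ 2) in H by (field; lra). lra. }
    rewrite E. split; [|apply atan_increasing].
    intros H. destruct (Rlt_le_dec q ((1 - t ^ 2) / (2 * t))) as [Hlt|Hge]; [exact Hlt|].
    destruct Hge as [Hgt|Heq]; [apply atan_increasing in Hgt|rewrite Heq in H]; lra.
Qed.

Definition cayley (f : C -> C) (w : C) : C := ((f w - 1) / (f w + 1))%C.

Lemma plus_1_neq_0 (x : C) : 0 < Re x -> (x + 1)%C <> 0%C.
Proof. intros H E. apply (f_equal Re) in E. rewrite re_plus, re_RtoC, re_RtoC in E. lra. Qed.

Lemma ell_cayley (f : C -> C) (w : C) : 0 < Re (f w) -> f w = ell (cayley f w).
Proof.
  intros H. pose proof (plus_1_neq_0 _ H). unfold ell, cayley. field. split; [exact H0|].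
  replace (f w + 1 - (f w - 1))%C with (RtoC 2) by ring. intros E. apply RtoC_inj in E. lra.
Qed.

Lemma Cmod_cayley_lt_1 (f : C -> C) (w : C) : 0 < Re (f w) -> Cmod (cayley f w) < 1.
Proof.
  intros H. pose proof (plus_1_neq_0 _ H). unfold cayley. rewrite Cmod_div by assumption.
  apply Rmult_lt_reg_r with (Cmod (f w + 1)); [now apply Cmod_gt_0|].
  unfold Rdiv.
  rewrite Rmult_assoc, Rinv_l, Rmult_1_r, Rmult_1_l by (now apply Rgt_not_eq, Cmod_gt_0).
  assert (Cmod (f w - 1) ^ 2 < Cmod (f w + 1) ^ 2).
  { rewrite !Cmod2_alt, !re_plus, !im_plus. unfold Cminus.
    rewrite re_plus, im_plus, re_opp, im_opp, re_RtoC, im_RtoC. nra. }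
  pose proof (Cmod_ge_0 (f w - 1)). pose proof (Cmod_ge_0 (f w + 1)). nra.
Qed.

Lemma Cmod_cayley_le (f : C -> C) (w : C) : classP f -> Cmod w < 1 -> Cmod (cayley f w) <= Cmod w.
Proof.
  intros [Hf [HRe H0]] Hw. rewrite analytic_on_D_iff in Hf.
  apply schwarz_lemma; [| | |exact Hw].
  - intros v Hv. unfold cayley. pose proof (plus_1_neq_0 _ (HRe v Hv)).
    apply ex_Cderive_div; [apply ex_Cderive_minus | apply ex_Cderive_plus | exact H];
      (apply Hf, Hv || apply ex_Cderive_const).
  - intros v Hv. now apply Cmod_cayley_lt_1, HRe.
  - unfold cayley, Cdiv. rewrite H0. ring.
Qed.

Lemma classP_ell_lam (lam : C) : Cmod lam = 1 -> classP (ell_lam lam).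
Proof.
  intros Hlam.
  assert (Hin : forall z, inD z -> Cmod (lam * z) < 1)
    by (intros z Hz; now rewrite Cmod_mult, Hlam, Rmult_1_l).
  assert (Hlin : forall z, ex_Cderive (fun w => lam * w)%C z)
    by (intros z; apply ex_Cderive_mult; [apply ex_Cderive_const | apply ex_Cderive_id]).
  split; [|split].
  - apply analytic_on_D_iff. intros z Hz. unfold ell_lam. apply ex_Cderive_div.
    + apply ex_Cderive_plus; [apply ex_Cderive_const | apply Hlin].
    + apply ex_Cderive_minus; [apply ex_Cderive_const | apply Hlin].
    + exact (one_minus_neq_0 _ (Hin z Hz)).
  - intros z Hz. exact (Re_ell_pos _ (Hin z Hz)).
  - unfold ell_lam. rewrite Cmult_0_r. field.
Qed.

Lemma classP_T_op (F phi : C -> C) : schwarz_type phi -> classP F ->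
  (forall z, inD z -> sector_bound (Cmod (phi z)) (F z)) ->
  forall f, classP f -> classP (T_op F phi f).
Proof.
  intros [Hphi [HphiD Hphi0]] [HF [HFre HF0]] Hsec f Hf.
  pose proof Hf as [Hfan [Hfre Hf0]]. rewrite analytic_on_D_iff in *.
  split; [|split].
  - apply analytic_on_D_iff. intros z Hz. unfold T_op. apply ex_Cderive_mult; [now apply HF|].
    apply (ex_Cderive_comp f phi); [apply Hfan, HphiD, Hz | apply Hphi, Hz].
  - intros z Hz. unfold T_op. rewrite (ell_cayley f (phi z)) by (apply Hfre, HphiD, Hz).
    apply (Re_mult_ell_pos _ _ (Cmod (phi z)));
      [apply HFre, Hz | | apply HphiD, Hz | apply Hsec, Hz].
    apply Cmod_cayley_le; [exact Hf | apply HphiD, Hz].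
  - unfold T_op. rewrite Hphi0, HF0, Hf0. ring.
Qed.

Lemma sector_bound_of_T_op_ell_lam (F phi : C -> C) : schwarz_type phi -> classP F ->
  (forall lam : C, Cmod lam = 1 -> classP (T_op F phi (ell_lam lam))) ->
  forall z, inD z -> sector_bound (Cmod (phi z)) (F z).
Proof.
  intros [_ [HphiD _]] [_ [HFre _]] Hb z Hz.
  apply sector_bound_of_rotations; [apply HFre, Hz | apply HphiD, Hz |].
  intros lam Hlam. exact (proj1 (proj2 (Hb lam Hlam)) z Hz).
Qed.

Theorem theorem2p2 (phi F omega : C -> C)
  (Hphi : schwarz_type phi) (HF : classP F)
  (Homega : schwarz_type omega) (HFw : forall z, inD z -> F z = ell (omega z)) :
  let a := forall f, classP f -> classP (T_op F phi f) in
  let b := forall lam : C, Cmod lam = 1 -> classP (T_op F phi (ell_lam lam)) in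
  let c1 := forall z, inD z ->
      4 * Cmod (phi z) * Rabs (Im (omega z))
      < (1 - Cmod (omega z) ^ 2) * (1 - Cmod (phi z) ^ 2) in
  let c2 := forall z, inD z ->
      2 * Cmod (phi z) * Rabs (Im (F z) / Re (F z)) < 1 - Cmod (phi z) ^ 2 in
  let d := forall z, inD z ->
      Rabs (Carg (F z)) < PI / 2 - asin (2 * Cmod (phi z) / (1 + Cmod (phi z) ^ 2)) in
  ((a <-> b) /\ (a <-> c1) /\ (a <-> c2) /\ (a <-> d)) /\
  (forall z, inD z ->
     PI / 2 - asin (2 * Cmod (phi z) / (1 + Cmod (phi z) ^ 2))
     = PI / 2 - atan (2 * Cmod (phi z) / (1 - Cmod (phi z) ^ 2)) /\
     PI / 2 - atan (2 * Cmod (phi z) / (1 - Cmod (phi z) ^ 2))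
     = atan_ratio (Cmod (phi z))).
Proof.
  intros a b c1 c2 d.
  pose proof (proj1 (proj2 HF)) as HFre.
  assert (Hphi_lt : forall z, inD z -> 0 <= Cmod (phi z) < 1)
    by (intros z Hz; split; [apply Cmod_ge_0 | apply (proj1 (proj2 Hphi)), Hz]).
  set (S := forall z, inD z -> sector_bound (Cmod (phi z)) (F z)).
  assert (AB : a -> b) by (intros Ha lam Hlam; apply Ha, classP_ell_lam, Hlam).
  assert (BS : b -> S) by exact (sector_bound_of_T_op_ell_lam F phi Hphi HF).
  assert (SA : S -> a) by exact (classP_T_op F phi Hphi HF).
  assert (C1S : c1 <-> S).
  { split; intros H z Hz; specialize (H z Hz); rewrite HFw in * by exact Hz;
      now apply sector_bound_ell_iff; [apply (proj1 (proj2 Homega)), Hz|]. }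
  assert (C2S : c2 <-> S) by (split; intros H z Hz; apply (sector_bound_iff_ratio (F z)); auto).
  assert (DS : d <-> S) by (split; intros H z Hz; apply (sector_bound_iff_arg (F z)); auto).
  split; [tauto|]. intros z Hz. exact (angle_identities _ (Hphi_lt z Hz)).
Qed.
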